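(* The terminal value problem $$\partial_tv(t,q)+v(t,q)C^S(q)-v(t,q)\,C\sum_{j\in\{a,b\}}\Big(\frac{v(t,q)}{\sum_{i\in\mathcal G}v(t,q\ominus_i\phi(j))\mathbf 1_{\{\phi(j)q^i>-\bar q\}}}\Big)^{\frac{k\varpi}{\sigma\eta}}=0,\quad (t,q)\in[0,T)\times\mathcal Q^N,\qquad v(T,q)=-1,\ q\in\mathcal Q^N,$$ (a system of $(2\bar q+1)^N$ ordinary differential equations) admits a unique bounded solution $v:[0,T]\times\mathcal Q^N\to\mathbb R$, and this solution is negative.
   Context: Fix integers $N\ge1$, $\bar q\in\mathbb N$, reals $T,A,k,\sigma,c,\varpi,\eta>0$, $\gamma_1,\dots,\gamma_N>0$. $\mathcal Q:=\{-\bar q,\dots,\bar q\}$; $\phi(a)=1$, $\phi(b)=-1$; $q\ominus_ix$ is $q$ with $i$-th coordinate $q^i-x$ (so $q\ominus_i(-1)$ adds one to $q^i$); $\mathcal G:=\{i:\gamma_i=\max_m\gamma_m\}$. A term in the sum over $j$ whose denominator is an empty sum (all indicators zero) is interpreted as $0$. $\mu_{i,j}:=-\eta\kappa\prod_{m\notin\{i,j\}}\gamma_m$ ($i\ne j$), $\mu_{i,i}:=\kappa(\prod_{j\ne i}\gamma_j+\eta\sum_{j\ne i}\prod_{m\notin\{i,j\}}\gamma_m)$, $\kappa^{-1}:=\prod_i\gamma_i+\eta\sum_j\prod_{m\ne j}\gamma_m$. $C^S(q):=\sum_{i=1}^N\frac\eta2\sigma^2\gamma_i\big(q^i-\sum_{j}\mu_{i,j}\gamma_jq^j\big)^2+\frac{\eta^2\sigma^2}2\big(\sum_i\sum_j\mu_{i,j}\gamma_jq^j\big)^2$.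 $C:=A\exp\big(-\frac k\sigma\big(c(1-\varpi)-\frac\varpi\eta\log\big(\frac{k\varpi}{k\varpi+\eta\sigma}\mathrm{Card}(\mathcal G)(1+\eta\sigma\sum_i\frac1{k\varpi+\sigma\gamma_i})\big)+\varpi\sum_i\gamma_i^{-1}\log(1+\frac{\sigma\gamma_i}{k\varpi})\big)\big)\cdot\frac{\sigma\eta}{k\varpi+\sigma\eta}\big(1+\eta\sigma\sum_i\frac1{k\varpi+\sigma\gamma_i}\big)$. *)

From Stdlib Require Import Reals Lra Lia ZArith List.
Import ListNotations.
Open Scope R_scope.

Definition Rsum (l : list nat) (f : nat -> R) : R :=
  fold_right (fun i acc => f i + acc) 0 l.
Definition Rprod (l : list nat) (f : nat -> R) : R :=
  fold_right (fun i acc => f i * acc) 1 l.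

Definition idx (N : nat) : list nat := seq 0 N.
Definition idx_ne1 (N i : nat) : list nat :=
  filter (fun m => negb (Nat.eqb m i)) (idx N).
Definition idx_ne2 (N i j : nat) : list nat :=
  filter (fun m => andb (negb (Nat.eqb m i)) (negb (Nat.eqb m j))) (idx N).

Definition kappa (N : nat) (eta : R) (gamma : nat -> R) : R :=
  / (Rprod (idx N) gamma
     + eta * Rsum (idx N) (fun j => Rprod (idx_ne1 N j) gamma)).

Definition mu (N : nat) (eta : R) (gamma : nat -> R) (i j : nat) : R :=
  if Nat.eqb i j then
    kappa N eta gamma *
      (Rprod (idx_ne1 N i) gamma
       + eta * Rsum (idx_ne1 N i) (fun j' => Rprod (idx_ne2 N i j') gamma))
  else - eta * kappa N eta gamma * Rprod (idx_ne2 N i j) gamma.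

(* Inventory vectors q in Z^N are lists of length N; q^i = nth i q 0. *)
Definition coord (q : list Z) (i : nat) : Z := nth i q 0%Z.

Fixpoint list_upd (q : list Z) (i : nat) (x : Z) : list Z :=
  match q, i with
  | [], _ => []
  | _ :: t, O => x :: t
  | h :: t, S i' => h :: list_upd t i' x
  end.

Definition qminus (q : list Z) (i : nat) (x : Z) : list Z :=
  list_upd q i (coord q i - x)%Z.

Definition inQN (N qbar : nat) (q : list Z) : Prop :=
  length q = N /\
  forall i, (i < N)%nat -> (- Z.of_nat qbar <= coord q i <= Z.of_nat qbar)%Z.

Definition CS (N : nat) (sigma eta : R) (gamma : nat -> R) (q : list Z) : R :=
  let Mq i := Rsum (idx N) (fun j => mu N eta gamma i j * gamma j * IZR (coord q j)) in
  Rsum (idx N) (fun i => eta / 2 * sigma ^ 2 * gamma i * (IZR (coord q i) - Mq i) ^ 2)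
  + eta ^ 2 * sigma ^ 2 / 2 * (Rsum (idx N) Mq) ^ 2.

Definition gmax (N : nat) (gamma : nat -> R) : R :=
  fold_right (fun i acc => Rmax (gamma i) acc) (gamma 0%nat) (idx N).

Definition is_max (N : nat) (gamma : nat -> R) (i : nat) : bool :=
  if Req_EM_T (gamma i) (gmax N gamma) then true else false.

Definition Gset (N : nat) (gamma : nat -> R) : list nat :=
  filter (is_max N gamma) (idx N).

Definition Cconst (N : nat) (A k sigma c varpi eta : R) (gamma : nat -> R) : R :=
  let S := 1 + eta * sigma * Rsum (idx N) (fun i => / (k * varpi + sigma * gamma i)) in
  A * exp (- (k / sigma) *
      (c * (1 - varpi)
       - varpi / eta * ln (k * varpi / (k * varpi + eta * sigma)
                           * INR (length (Gset N gamma)) * S)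
       + varpi * Rsum (idx N) (fun i => / gamma i * ln (1 + sigma * gamma i / (k * varpi)))))
  * (sigma * eta / (k * varpi + sigma * eta)) * S.

Definition act_idx (N qbar : nat) (gamma : nat -> R) (phi : Z) (q : list Z) : list nat :=
  filter (fun i => Z.ltb (- Z.of_nat qbar) (phi * coord q i)) (Gset N gamma).

Definition denom (N qbar : nat) (gamma : nat -> R) (v : R -> list Z -> R)
  (t : R) (phi : Z) (q : list Z) : R :=
  Rsum (act_idx N qbar gamma phi q) (fun i => v t (qminus q i phi)).

(* the j-term of the sum; 0 when the denominator is an empty sum *)
Definition jterm (N qbar : nat) (k sigma varpi eta : R) (gamma : nat -> R)
  (v : R -> list Z -> R) (t : R) (phi : Z) (q : list Z) : R :=
  match act_idx N qbar gamma phi q with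
  | [] => 0
  | _ => Rpower (v t q / denom N qbar gamma v t phi q) (k * varpi / (sigma * eta))
  end.

(* well-definedness of the real power: the base is positive whenever the
   denominator is a nonempty sum *)
Definition jterm_welldef (N qbar : nat) (gamma : nat -> R)
  (v : R -> list Z -> R) (t : R) (phi : Z) (q : list Z) : Prop :=
  act_idx N qbar gamma phi q <> [] ->
  denom N qbar gamma v t phi q <> 0 /\ 0 < v t q / denom N qbar gamma v t phi q.

(* derivative of f at t within the interval [a, b] (one-sided at endpoints) *)
Definition deriv_within (f : R -> R) (a b t l : R) : Prop :=
  forall eps, 0 < eps -> exists delta, 0 < delta /\
    forall s, a <= s <= b -> s <> t -> Rabs (s - t) < delta ->
      Rabs ((f s - f t) / (s - t) - l) < eps.

Definition cont_within (f : R -> R) (a b t : R) : Prop :=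
  forall eps, 0 < eps -> exists delta, 0 < delta /\
    forall s, a <= s <= b -> Rabs (s - t) < delta -> Rabs (f s - f t) < eps.

Definition is_solution (N qbar : nat) (T A k sigma c varpi eta : R)
  (gamma : nat -> R) (v : R -> list Z -> R) : Prop :=
  forall q, inQN N qbar q ->
    (exists dv : R -> R,
       forall t, 0 <= t < T ->
         deriv_within (fun s => v s q) 0 T t (dv t) /\
         jterm_welldef N qbar gamma v t 1%Z q /\
         jterm_welldef N qbar gamma v t (-1)%Z q /\
         dv t + v t q * CS N sigma eta gamma q
         - v t q * Cconst N A k sigma c varpi eta gamma *
             (jterm N qbar k sigma varpi eta gamma v t 1%Z q
              + jterm N qbar k sigma varpi eta gamma v t (-1)%Z q) = 0)
    /\ cont_within (fun s => v s q) 0 T T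
    /\ v T q = -1.

Definition bounded_on (N qbar : nat) (T : R) (v : R -> list Z -> R) : Prop :=
  exists M, forall t q, 0 <= t <= T -> inQN N qbar q -> Rabs (v t q) <= M.

(** Writing [alpha = k varpi / (sigma eta)] and substituting
    [v(t, q) = - z(T - t, q)^(-1/alpha)], the equation becomes, in reversed
    time [s = T - t], the system
      [z' = - alpha C^S(q) z + alpha C (M_a(z)(q) + M_b(z)(q))],  [z(0) = 1],
    where [M_j(z)(q)] is a power mean of [z] over the active neighbours of [q].
    Power means are monotone, homogeneous and bounded by their entries, hence
    1-Lipschitz for the sup norm; as long as [z] stays positive the system is
    therefore Lipschitz.  A comparison with the linear part shows that every
    solution stays above an explicit floor, so the field may be modified
    below that floor into a globally Lipschitz one without changing any
    solution. *)

From Stdlib Require Import Reals Lra Lia ZArith List.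
Import ListNotations.
From Coquelicot Require Import Coquelicot.
Open Scope R_scope.

(** Clamping to [a, b]: turns functions known only on [a, b] into functions
    on the whole line, which is how Coquelicot's global notions are reached. *)
Definition clamp (a b x : R) : R := Rmax a (Rmin b x).

Lemma clamp_in a b x : a <= b -> a <= clamp a b x <= b.
Proof. intros; unfold clamp, Rmax, Rmin; repeat destruct Rle_dec; lra. Qed.

Lemma clamp_id a b x : a <= x <= b -> clamp a b x = x.
Proof. intros; unfold clamp, Rmax, Rmin; repeat destruct Rle_dec; lra. Qed.

Lemma clamp_lip a b x y : a <= b -> Rabs (clamp a b x - clamp a b y) <= Rabs (x - y).
Proof.
  intros; unfold clamp, Rmax, Rmin, Rabs;
    repeat destruct Rle_dec; repeat destruct Rcase_abs; lra.
Qed.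

Lemma deriv_within_cont f a b t l : deriv_within f a b t l -> cont_within f a b t.
Proof.
  intros Hd eps Heps. destruct (Hd 1 Rlt_0_1) as [d1 [Hd1 H1]].
  assert (HM : 0 < Rabs l + 1) by (pose proof (Rabs_pos l); lra).
  exists (Rmin d1 (eps / (Rabs l + 1))). split.
  { apply Rmin_pos; [lra | apply Rdiv_lt_0_compat; lra]. }
  intros s Hs Hst. destruct (Req_dec s t) as [->|Hne].
  { rewrite Rminus_diag, Rabs_R0; lra. }
  assert (Hq := H1 s Hs Hne (Rlt_le_trans _ _ _ Hst (Rmin_l _ _))).
  assert (Hslope : Rabs ((f s - f t) / (s - t)) < Rabs l + 1).
  { revert Hq. unfold Rabs; repeat destruct Rcase_abs; lra. }
  assert (Hst2 : Rabs (s - t) < eps / (Rabs l + 1))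
    by (apply Rlt_le_trans with (1 := Hst); apply Rmin_r).
  replace (f s - f t) with ((f s - f t) / (s - t) * (s - t)) by (field; lra).
  rewrite Rabs_mult.
  apply Rle_lt_trans with ((Rabs l + 1) * Rabs (s - t)).
  { apply Rmult_le_compat_r; [apply Rabs_pos | lra]. }
  apply Rlt_le_trans with ((Rabs l + 1) * (eps / (Rabs l + 1))).
  { apply Rmult_lt_compat_l; lra. }
  right; field; lra.
Qed.

Lemma clamp_continuity_pt f a b y : a <= b -> cont_within f a b (clamp a b y) ->
  continuity_pt (fun x => f (clamp a b x)) y.
Proof.
  intros Hab Hc eps Heps. destruct (Hc eps Heps) as [d [Hd H]].
  exists d; split; [exact Hd |]. intros x [_ Hx]. simpl in *. unfold R_dist in *.
  apply H; [apply clamp_in; auto |].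
  eapply Rle_lt_trans; [apply clamp_lip; auto | exact Hx].
Qed.

Lemma continuity_pt_clamp f a b t : a <= t <= b ->
  continuity_pt (fun x => f (clamp a b x)) t -> cont_within f a b t.
Proof.
  intros Ht Hc eps Heps. destruct (Hc eps Heps) as [d [Hd H]]. exists d; split; auto.
  intros s Hs Hst. simpl in H. unfold R_dist in H.
  specialize (H s). rewrite (clamp_id a b s Hs), (clamp_id a b t Ht) in H.
  destruct (Req_dec s t) as [->|Hne]; [rewrite Rminus_diag, Rabs_R0; lra |].
  apply H. repeat split; auto.
Qed.

Lemma continuity_pt_cont_within f a b t : continuity_pt f t -> cont_within f a b t.
Proof.
  intros Hc eps Heps. destruct (Hc eps Heps) as [d [Hd H]]. exists d; split; auto.
  intros s Hs Hst. destruct (Req_dec s t) as [->|Hne]; [rewrite Rminus_diag, Rabs_R0; lra |].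
  apply (H s). repeat split; auto.
Qed.

Lemma cont_within_plus f g a b t : a <= b -> a <= t <= b ->
  cont_within f a b t -> cont_within g a b t -> cont_within (fun s => f s + g s) a b t.
Proof.
  intros Hab Ht Hf Hg. apply continuity_pt_clamp; auto.
  rewrite <- (clamp_id a b t Ht) in Hf, Hg.
  apply continuity_pt_plus; apply clamp_continuity_pt; auto.
Qed.

Lemma cont_within_mult f g a b t : a <= b -> a <= t <= b ->
  cont_within f a b t -> cont_within g a b t -> cont_within (fun s => f s * g s) a b t.
Proof.
  intros Hab Ht Hf Hg. apply continuity_pt_clamp; auto.
  rewrite <- (clamp_id a b t Ht) in Hf, Hg.
  apply continuity_pt_mult; apply clamp_continuity_pt; auto.
Qed.

Lemma cont_within_comp f (g : R -> R) a b t : a <= b -> a <= t <= b ->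
  cont_within f a b t -> continuity_pt g (f t) -> cont_within (fun s => g (f s)) a b t.
Proof.
  intros Hab Ht Hf Hg. apply continuity_pt_clamp; auto.
  apply (continuity_pt_comp (fun x => f (clamp a b x)) g).
  - apply clamp_continuity_pt; auto. rewrite clamp_id; auto.
  - rewrite clamp_id; auto.
Qed.

Lemma cont_within_minus f g a b t : a <= b -> a <= t <= b ->
  cont_within f a b t -> cont_within g a b t -> cont_within (fun s => f s - g s) a b t.
Proof.
  intros Hab Ht Hf Hg. apply (cont_within_plus f (fun s => - g s)); auto.
  apply (cont_within_comp g Ropp); auto. apply continuity_pt_opp, continuity_pt_id.
Qed.

Lemma cont_within_sub f a b a' b' t : a <= a' -> b' <= b ->
  cont_within f a b t -> cont_within f a' b' t.
Proof.
  intros H1 H2 Hc eps Heps. destruct (Hc eps Heps) as [d [Hd H]]. exists d; split; auto.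
  intros s Hs Hst. apply H; auto; lra.
Qed.

Lemma cont_within_reverse f T t : cont_within f 0 T (T - t) -> 0 <= t <= T ->
  cont_within (fun s => f (T - s)) 0 T t.
Proof.
  intros Hc Ht eps Heps. destruct (Hc eps Heps) as [d [Hd H]]. exists d; split; auto.
  intros s Hs Hst. apply H; [lra |].
  replace (T - s - (T - t)) with (- (s - t)) by ring. rewrite Rabs_Ropp; auto.
Qed.

Lemma deriv_within_interior f a b t l : deriv_within f a b t l -> a < t < b ->
  is_derive f t l.
Proof.
  intros Hd Ht. apply is_derive_Reals. intros eps Heps.
  destruct (Hd eps Heps) as [d [Hd0 H]].
  assert (Hp : 0 < Rmin d (Rmin (t - a) (b - t))) by (repeat apply Rmin_pos; lra).
  exists (mkposreal _ Hp). intros h Hh Hha. simpl in Hha.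
  pose proof (Rmin_l d (Rmin (t - a) (b - t))). pose proof (Rmin_r d (Rmin (t - a) (b - t))).
  pose proof (Rmin_l (t - a) (b - t)). pose proof (Rmin_r (t - a) (b - t)).
  replace ((f (t + h) - f t) / h) with ((f (t + h) - f t) / ((t + h) - t)) by (f_equal; ring).
  apply H.
  - unfold Rabs in Hha; destruct Rcase_abs; lra.
  - intro E; apply Hh; lra.
  - replace (t + h - t) with h by ring; lra.
Qed.

Lemma is_derive_cont_within f a b t l : is_derive f t l -> cont_within f a b t.
Proof.
  intros Hd. apply continuity_pt_cont_within, (proj2 (continuity_pt_filterlim _ _)).
  apply (ex_derive_continuous f t). exists l; exact Hd.
Qed.

(** First-order approximation form of [deriv_within]; it is the convenient
    form for chain rules. *)
Definition lin_approx_within (f : R -> R) a b t l : Prop :=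
  forall eps, 0 < eps -> exists delta, 0 < delta /\
    forall s, a <= s <= b -> Rabs (s - t) < delta ->
      Rabs (f s - f t - l * (s - t)) <= eps * Rabs (s - t).

Lemma deriv_within_lin_approx f a b t l :
  deriv_within f a b t l -> lin_approx_within f a b t l.
Proof.
  intros Hd eps Heps. destruct (Hd eps Heps) as [d [Hd0 H]]. exists d; split; auto.
  intros s Hs Hst. destruct (Req_dec s t) as [->|Hne].
  { replace (f t - f t - l * (t - t)) with 0 by ring. rewrite Rabs_R0.
    apply Rmult_le_pos; [lra | apply Rabs_pos]. }
  specialize (H s Hs Hne Hst).
  replace (f s - f t - l * (s - t)) with (((f s - f t) / (s - t) - l) * (s - t))
    by (field; lra).
  rewrite Rabs_mult. apply Rmult_le_compat_r; [apply Rabs_pos | lra].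
Qed.

Lemma lin_approx_deriv_within f a b t l :
  lin_approx_within f a b t l -> deriv_within f a b t l.
Proof.
  intros Hd eps Heps. destruct (Hd (eps / 2)) as [d [Hd0 H]]; [lra |].
  exists d; split; auto. intros s Hs Hne Hst. specialize (H s Hs Hst).
  assert (Hp : 0 < Rabs (s - t)) by (apply Rabs_pos_lt; lra).
  replace ((f s - f t) / (s - t) - l) with ((f s - f t - l * (s - t)) / (s - t))
    by (field; lra).
  unfold Rdiv; rewrite Rabs_mult, Rabs_inv.
  apply Rle_lt_trans with (eps / 2 * Rabs (s - t) * / Rabs (s - t)).
  { apply Rmult_le_compat_r; [left; apply Rinv_0_lt_compat |]; auto. }
  field_simplify; lra.
Qed.

Lemma deriv_within_local_lipschitz f a b t l : deriv_within f a b t l ->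
  exists delta, 0 < delta /\ forall s, a <= s <= b -> Rabs (s - t) < delta ->
    Rabs (f s - f t) <= (Rabs l + 1) * Rabs (s - t).
Proof.
  intros Hd. destruct (deriv_within_lin_approx _ _ _ _ _ Hd 1 Rlt_0_1) as [d [Hd0 H]].
  exists d; split; auto. intros s Hs Hst. specialize (H s Hs Hst).
  replace (f s - f t) with ((f s - f t - l * (s - t)) + l * (s - t)) by ring.
  eapply Rle_trans; [apply Rabs_triang |]. rewrite Rabs_mult. lra.
Qed.

Lemma derivable_pt_lim_lin_approx (g : R -> R) y m : derivable_pt_lim g y m ->
  forall e, 0 < e -> exists d, 0 < d /\
    forall z, Rabs (z - y) < d -> Rabs (g z - g y - m * (z - y)) <= e * Rabs (z - y).
Proof.
  intros Hg e He. destruct (Hg e He) as [d H]. exists d; split; [apply cond_pos |].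
  intros z Hz. destruct (Req_dec z y) as [->|Hne].
  { rewrite !Rminus_diag, Rmult_0_r, Rminus_0_r, Rabs_R0; lra. }
  specialize (H (z - y) ltac:(lra) Hz). replace (y + (z - y)) with z in H by ring.
  replace (g z - g y - m * (z - y)) with (((g z - g y) / (z - y) - m) * (z - y))
    by (field; lra).
  rewrite Rabs_mult. apply Rmult_le_compat_r; [apply Rabs_pos | lra].
Qed.

Lemma deriv_within_comp f (g : R -> R) a b t l m :
  deriv_within f a b t l -> derivable_pt_lim g (f t) m ->
  deriv_within (fun s => g (f s)) a b t (m * l).
Proof.
  intros Hf Hg. apply lin_approx_deriv_within. intros eps Heps.
  set (M := Rabs l + 1). set (Mm := Rabs m + 1).
  pose proof (Rabs_pos l). pose proof (Rabs_pos m).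
  destruct (derivable_pt_lim_lin_approx g (f t) m Hg (eps / (2 * M))) as [d1 [Hd1 H1]];
    [apply Rdiv_lt_0_compat; unfold M; lra |].
  destruct (deriv_within_lin_approx _ _ _ _ _ Hf (eps / (2 * Mm))) as [d2 [Hd2 H2]];
    [apply Rdiv_lt_0_compat; unfold Mm; lra |].
  destruct (deriv_within_cont _ _ _ _ _ Hf d1 Hd1) as [d3 [Hd3 H3]].
  destruct (deriv_within_local_lipschitz _ _ _ _ _ Hf) as [d4 [Hd4 H4]].
  exists (Rmin (Rmin d2 d3) d4). split; [repeat apply Rmin_pos; lra |].
  intros s Hs Hst.
  pose proof (Rmin_l (Rmin d2 d3) d4). pose proof (Rmin_r (Rmin d2 d3) d4).
  pose proof (Rmin_l d2 d3). pose proof (Rmin_r d2 d3). pose proof (Rabs_pos (s - t)).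
  specialize (H1 (f s) (H3 s Hs ltac:(lra))).
  specialize (H2 s Hs ltac:(lra)). specialize (H4 s Hs ltac:(lra)). fold M in H4.
  replace (g (f s) - g (f t) - m * l * (s - t)) with
    ((g (f s) - g (f t) - m * (f s - f t)) + m * (f s - f t - l * (s - t))) by ring.
  eapply Rle_trans; [apply Rabs_triang |]. rewrite Rabs_mult.
  assert (A1 : eps / (2 * M) * Rabs (f s - f t) <= eps / 2 * Rabs (s - t)).
  { apply Rle_trans with (eps / (2 * M) * (M * Rabs (s - t))).
    - apply Rmult_le_compat_l; auto. left; apply Rdiv_lt_0_compat; unfold M; lra.
    - right; field; unfold M; lra. }
  assert (A2 : Rabs m * Rabs (f s - f t - l * (s - t)) <= eps / 2 * Rabs (s - t)).
  { apply Rle_trans with (Rabs m * (eps / (2 * Mm) * Rabs (s - t))).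
    - apply Rmult_le_compat_l; auto.
    - replace (Rabs m * (eps / (2 * Mm) * Rabs (s - t)))
        with (Rabs m / Mm * (eps / 2 * Rabs (s - t))) by (field; unfold Mm; lra).
      rewrite <- (Rmult_1_l (eps / 2 * Rabs (s - t))) at 2.
      apply Rmult_le_compat_r; [apply Rmult_le_pos; lra |].
      unfold Mm. apply Rmult_le_reg_r with (Rabs m + 1); [lra |].
      unfold Rdiv; rewrite Rmult_assoc, Rinv_l by lra. lra. }
  lra.
Qed.

Lemma deriv_within_reverse f T t l : deriv_within f 0 T (T - t) l ->
  deriv_within (fun s => f (T - s)) 0 T t (- l).
Proof.
  intros Hd. apply lin_approx_deriv_within. intros eps Heps.
  destruct (deriv_within_lin_approx _ _ _ _ _ Hd eps Heps) as [d [Hd0 H]].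
  exists d; split; auto. intros s Hs Hst.
  specialize (H (T - s) ltac:(lra)).
  replace (T - s - (T - t)) with (- (s - t)) in H by ring.
  rewrite Rabs_Ropp in H. specialize (H Hst).
  replace (f (T - s) - f (T - t) - - l * (s - t))
    with (f (T - s) - f (T - t) - l * - (s - t)) by ring.
  auto.
Qed.

Lemma nonincreasing_interval g dg a b : a <= b ->
  (forall x, a < x < b -> is_derive g x (dg x) /\ dg x <= 0) ->
  (forall x, a <= x <= b -> cont_within g a b x) -> g b <= g a.
Proof.
  intros Hab Hd Hc.
  pose (df := fun x => if Rlt_dec a x then if Rlt_dec x b then dg x else 0 else 0).
  destruct (MVT_gen (fun x => g (clamp a b x)) a b df) as [c [Hc1 Hc2]].
  - intros x Hx. rewrite Rmin_left in Hx by lra. rewrite Rmax_right in Hx by lra.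
    unfold df; destruct Rlt_dec; [| lra]; destruct Rlt_dec; [| lra].
    apply is_derive_ext_loc with g; [| apply Hd; lra].
    assert (Hp : 0 < Rmin (x - a) (b - x)) by (apply Rmin_pos; lra).
    exists (mkposreal _ Hp). intros y Hy. simpl in Hy.
    unfold ball in Hy; simpl in Hy; unfold AbsRing_ball, abs, minus, plus, opp in Hy; simpl in Hy.
    pose proof (Rmin_l (x - a) (b - x)). pose proof (Rmin_r (x - a) (b - x)).
    rewrite clamp_id; auto. unfold Rabs in Hy; destruct Rcase_abs; lra.
  - intros x _. apply clamp_continuity_pt; auto. apply Hc, clamp_in; auto.
  - rewrite !clamp_id in Hc2 by lra.
    rewrite Rmin_left in Hc1 by lra. rewrite Rmax_right in Hc1 by lra.
    assert (df c <= 0).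
    { unfold df; destruct Rlt_dec; [destruct Rlt_dec |]; try lra. apply Hd; lra. }
    nra.
Qed.

Lemma nondecreasing_interval g dg a b : a <= b ->
  (forall x, a < x < b -> is_derive g x (dg x) /\ 0 <= dg x) ->
  (forall x, a <= x <= b -> cont_within g a b x) -> g a <= g b.
Proof.
  intros Hab Hd Hc.
  enough (- g b <= - g a) by lra.
  apply (nonincreasing_interval (fun x => - g x) (fun x => - dg x) a b Hab).
  - intros x Hx. destruct (Hd x Hx). split; [apply (is_derive_opp g x (dg x)); auto | lra].
  - intros x Hx. apply (cont_within_comp g Ropp); auto.
    apply continuity_pt_opp, continuity_pt_id.
Qed.

Lemma mean_value_bound f df x y K E : (forall c, is_derive f c (df c)) ->
  (forall c, Rmin x y <= c <= Rmax x y -> Rabs (df c - K) <= E) ->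
  Rabs (f y - f x - K * (y - x)) <= E * Rabs (y - x).
Proof.
  intros Hd Hb.
  destruct (MVT_gen (fun s => f s - K * s) x y (fun c => df c - K)) as [c [Hc Heq]].
  - intros z _. apply (is_derive_minus f (fun s => K * s)); auto.
    auto_derive; [auto | ring].
  - intros z _. apply continuity_pt_minus.
    + apply (proj2 (continuity_pt_filterlim _ _)), (ex_derive_continuous f z).
      exists (df z); auto.
    + apply continuity_pt_mult; [apply continuity_pt_const; intros u v; auto
                                 | apply continuity_pt_id].
  - replace (f y - f x - K * (y - x)) with (f y - K * y - (f x - K * x)) by ring.
    rewrite Heq, Rabs_mult. apply Rmult_le_compat_r; [apply Rabs_pos | auto].
Qed.

Lemma lipschitz_of_deriv f df B : (forall c, is_derive f c (df c)) ->
  (forall c, Rabs (df c) <= B) -> forall x y, Rabs (f x - f y) <= B * Rabs (x - y).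
Proof.
  intros Hd Hb x y. pose proof (mean_value_bound f df y x 0 B Hd) as H.
  rewrite Rmult_0_l, Rminus_0_r in H. apply H. intros. rewrite Rminus_0_r; auto.
Qed.

Lemma lipschitz_continuous (f : R -> R) L : 0 <= L ->
  (forall a b, Rabs (f a - f b) <= L * Rabs (a - b)) -> forall x, continuity_pt f x.
Proof.
  intros HL H x eps Heps. exists (eps / (L + 1)). split; [apply Rdiv_lt_0_compat; lra |].
  intros y [_ Hy]. simpl in *. unfold R_dist in *.
  eapply Rle_lt_trans; [apply H |].
  apply Rle_lt_trans with ((L + 1) * Rabs (y - x)); [pose proof (Rabs_pos (y - x)); nra |].
  apply Rlt_le_trans with ((L + 1) * (eps / (L + 1))); [apply Rmult_lt_compat_l; lra |].
  right; field; lra.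
Qed.

Lemma is_derive_exp_lin (a x : R) : is_derive (fun x => exp (a * x)) x (a * exp (a * x)).
Proof. auto_derive; auto. ring. Qed.

Lemma continuity_pt_exp_lin a x : continuity_pt (fun x => exp (a * x)) x.
Proof.
  apply (proj2 (continuity_pt_filterlim _ _)), (ex_derive_continuous (fun x => exp (a * x)) x).
  eexists; apply is_derive_exp_lin.
Qed.

Lemma exp_le_mono x y : x <= y -> exp x <= exp y.
Proof.
  intros [Hlt | ->]; [left; apply exp_increasing; auto | lra].
Qed.

Lemma exp_lin_mono L s t : 0 <= L -> s <= t -> exp (L * s) <= exp (L * t).
Proof. intros HL Hst. apply exp_le_mono, Rmult_le_compat_l; auto. Qed.

Lemma is_derive_eq_value (f : R -> R) x l l' : is_derive f x l -> l = l' -> is_derive f x l'.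
Proof. intros H <-; exact H. Qed.

(** Iterating it
    halves the distance between Picard iterates at each step. *)
Lemma weighted_gronwall f df T L K : 0 <= L -> 0 <= K -> f 0 = 0 ->
  (forall x, 0 < x < T -> is_derive f x (df x) /\ Rabs (df x) <= L * K * exp (2 * L * x)) ->
  (forall x, 0 <= x <= T -> cont_within f 0 T x) ->
  forall t, 0 <= t <= T -> Rabs (f t) <= K / 2 * exp (2 * L * t).
Proof.
  intros HL HK H0 Hd Hc t Ht.
  set (E := fun x => K / 2 * exp (2 * L * x)).
  assert (HE : forall x, is_derive E x (K * L * exp (2 * L * x)))
    by (intros x; unfold E; auto_derive; auto; field).
  assert (HEc : forall x, cont_within (fun x => - E x) 0 t x).
  { intros x. apply continuity_pt_cont_within, continuity_pt_opp.
    apply (proj2 (continuity_pt_filterlim _ _)), (ex_derive_continuous E x).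
    eexists; apply HE. }
  assert (Hcw : forall x, 0 <= x <= t -> cont_within f 0 t x)
    by (intros x Hx; apply cont_within_sub with 0 T; try lra; apply Hc; lra).
  assert (A1 : f t - E t <= f 0 - E 0).
  { apply (nonincreasing_interval (fun x => f x - E x)
             (fun x => df x - K * L * exp (2 * L * x)) 0 t); [lra | |].
    - intros x Hx. destruct (Hd x ltac:(lra)) as [Hd1 Hd2].
      split; [apply (is_derive_minus f); auto |].
      unfold Rabs in Hd2; destruct Rcase_abs; nra.
    - intros x Hx. apply cont_within_plus; auto; lra. }
  assert (A2 : - f t - E t <= - f 0 - E 0).
  { apply (nonincreasing_interval (fun x => - f x - E x)
             (fun x => - df x - K * L * exp (2 * L * x)) 0 t); [lra | |].
    - intros x Hx. destruct (Hd x ltac:(lra)) as [Hd1 Hd2].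
      split; [apply (is_derive_minus (fun x => - f x)); auto; apply (is_derive_opp f); auto |].
      unfold Rabs in Hd2; destruct Rcase_abs; nra.
    - intros x Hx. apply cont_within_plus; auto; [lra |].
      apply (cont_within_comp f Ropp); auto; [lra |].
      apply continuity_pt_opp, continuity_pt_id. }
  unfold E in *. rewrite H0, Rmult_0_r, exp_0 in *. unfold Rabs; destruct Rcase_abs; lra.
Qed.

Lemma negative_without_zero g a b : a <= b ->
  (forall x, a <= x <= b -> cont_within g a b x) -> g b < 0 ->
  (forall s, a <= s < b -> g s <> 0) -> g a < 0.
Proof.
  intros Hab Hc Hb Hnz. destruct (Rlt_or_le (g a) 0) as [|Hge]; auto. exfalso.
  destruct (Req_dec a b) as [<-|Hne]; [lra |].
  destruct Hge as [Hgt|Heq]; [| apply (Hnz a); lra].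
  assert (Hcc : continuity (fun x => - g (clamp a b x))).
  { intros x. apply continuity_pt_opp, clamp_continuity_pt; auto. apply Hc, clamp_in; auto. }
  destruct (IVT _ a b Hcc) as [z [Hz1 Hz2]]; [lra | rewrite clamp_id; lra | rewrite clamp_id; lra |].
  rewrite clamp_id in Hz2 by lra.
  destruct (Req_dec z b) as [->|]; [lra | apply (Hnz z); lra].
Qed.
Lemma half_pow_pos n : 0 < (/ 2) ^ n.
Proof. apply pow_lt; lra. Qed.

Lemma half_pow_small e : 0 < e -> exists n0, forall n, (n0 <= n)%nat -> (/ 2) ^ n < e.
Proof.
  intros He. destruct (pow_lt_1_zero (/ 2)) with e as [n0 Hn0]; auto.
  { rewrite Rabs_pos_eq; lra. }
  exists n0; intros n Hn. specialize (Hn0 n Hn).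
  rewrite Rabs_pos_eq in Hn0; auto. left; apply half_pow_pos.
Qed.

Lemma le_of_geometric x y c : 0 <= c -> (forall n, x <= y + c * (/ 2) ^ n) -> x <= y.
Proof.
  intros Hc H. apply Rle_plus_epsilon. intros e He.
  destruct (half_pow_small (e / (c + 1))) as [n0 Hn0]; [apply Rdiv_lt_0_compat; lra |].
  specialize (Hn0 n0 (le_n _)). specialize (H n0). pose proof (half_pow_pos n0).
  assert (c * (/ 2) ^ n0 <= e).
  { apply Rle_trans with ((c + 1) * (e / (c + 1))); [| right; field; lra].
    apply Rle_trans with ((c + 1) * (/ 2) ^ n0); [nra |].
    apply Rmult_le_compat_l; lra. }
  lra.
Qed.

Lemma eq_of_geometric x y c : 0 <= c -> (forall n, Rabs (x - y) <= c * (/ 2) ^ n) -> x = y.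
Proof.
  intros Hc H. assert (Rabs (x - y) <= 0).
  { apply (le_of_geometric _ _ c Hc). intros n. rewrite Rplus_0_l. apply H. }
  pose proof (Rabs_pos (x - y)).
  assert (Habs : Rabs (x - y) = 0) by lra. apply Rabs_eq_0 in Habs. lra.
Qed.

Lemma geometric_steps_sum (a : nat -> R) c :
  (forall n, Rabs (a (S n) - a n) <= c * (/ 2) ^ n) ->
  forall n m, (n <= m)%nat -> Rabs (a m - a n) <= 2 * c * (/ 2) ^ n.
Proof.
  intros H n m Hnm.
  assert (Hk : forall k, Rabs (a (n + k)%nat - a n) <= 2 * c * ((/ 2) ^ n - (/ 2) ^ (n + k))).
  { induction k.
    - rewrite Nat.add_0_r, Rminus_diag, Rabs_R0. rewrite Rminus_diag. lra.
    - replace (n + S k)%nat with (S (n + k)) by lia.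
      replace (a (S (n + k)) - a n)
        with ((a (S (n + k)) - a (n + k)%nat) + (a (n + k)%nat - a n)) by ring.
      eapply Rle_trans; [apply Rabs_triang |]. specialize (H (n + k)%nat). simpl pow. lra. }
  replace m with (n + (m - n))%nat by lia.
  eapply Rle_trans; [apply Hk |].
  assert (Hc : 0 <= c) by (specialize (H O); pose proof (Rabs_pos (a 1%nat - a 0%nat)); simpl in H; lra).
  pose proof (half_pow_pos (n + (m - n))). nra.
Qed.

Lemma geometric_limit (a : nat -> R) c :
  (forall n, Rabs (a (S n) - a n) <= c * (/ 2) ^ n) ->
  forall n, Rabs (a n - Lim_seq a) <= 2 * c * (/ 2) ^ n.
Proof.
  intros H.
  assert (Hc : 0 <= c) by (specialize (H O); pose proof (Rabs_pos (a 1%nat - a 0%nat)); simpl in H; lra).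
  assert (Hb := geometric_steps_sum a c H).
  assert (Hex : ex_finite_lim_seq a).
  { apply ex_lim_seq_cauchy_corr. intros eps.
    destruct (half_pow_small (eps / (4 * c + 1))) as [n0 Hn0];
      [apply Rdiv_lt_0_compat; [apply cond_pos | lra] |].
    exists n0. intros n m Hn Hm.
    assert (Hn' := Hb n0 n Hn). assert (Hm' := Hb n0 m Hm). specialize (Hn0 n0 (le_n _)).
    assert (2 * c * (/ 2) ^ n0 < eps / 2).
    { pose proof (cond_pos eps). pose proof (half_pow_pos n0).
      apply Rle_lt_trans with ((4 * c + 1) / 2 * (/ 2) ^ n0); [nra |].
      apply Rlt_le_trans with ((4 * c + 1) / 2 * (eps / (4 * c + 1)));
        [apply Rmult_lt_compat_l; auto; lra | right; field; lra]. }
    replace (a n - a m) with ((a n - a n0) - (a m - a n0)) by ring.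
    eapply Rle_lt_trans; [apply Rabs_triang |]. rewrite Rabs_Ropp. lra. }
  destruct Hex as [l Hl].
  rewrite (is_lim_seq_unique _ _ Hl). simpl.
  apply is_lim_seq_spec in Hl. simpl in Hl.
  intros n. apply Rle_plus_epsilon. intros e He.
  destruct (Hl (mkposreal e He)) as [M HM]. simpl in HM.
  specialize (HM (max n M) (Nat.le_max_r _ _)).
  specialize (Hb n (max n M) (Nat.le_max_l _ _)).
  replace (a n - l) with (- (a (max n M) - a n) + (a (max n M) - l)) by ring.
  eapply Rle_trans; [apply Rabs_triang |]. rewrite Rabs_Ropp. lra.
Qed.

Lemma Rsum_ext l f g : (forall i, In i l -> f i = g i) -> Rsum l f = Rsum l g.
Proof. induction l; simpl; intros H; auto. rewrite H, IHl; auto. Qed.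

Lemma Rsum_scal l f c : Rsum l (fun i => c * f i) = c * Rsum l f.
Proof. induction l; simpl; [ring | rewrite IHl; ring]. Qed.

Lemma Rsum_le l f g : (forall i, In i l -> f i <= g i) -> Rsum l f <= Rsum l g.
Proof.
  induction l; simpl; intros H; [lra |].
  pose proof (H a (or_introl eq_refl)).
  assert (Rsum l f <= Rsum l g) by (apply IHl; auto). lra.
Qed.

Lemma Rsum_nonneg l f : (forall i, In i l -> 0 <= f i) -> 0 <= Rsum l f.
Proof.
  intros H. apply Rle_trans with (Rsum l (fun _ => 0)); [| apply Rsum_le; auto].
  clear H; induction l; simpl; lra.
Qed.

Lemma Rsum_ge_elem l f j : (forall i, In i l -> 0 <= f i) -> In j l -> f j <= Rsum l f.
Proof.
  induction l; simpl; intros H Hj; [contradiction |].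
  destruct Hj as [->|Hj].
  - assert (0 <= Rsum l f) by (apply Rsum_nonneg; auto). lra.
  - pose proof (H a (or_introl eq_refl)).
    pose proof (IHl (fun i Hi => H i (or_intror Hi)) Hj). lra.
Qed.

Lemma Rsum_pos l f : l <> [] -> (forall i, In i l -> 0 < f i) -> 0 < Rsum l f.
Proof.
  destruct l as [|a l]; [congruence |]. intros _ H.
  apply Rlt_le_trans with (f a); [apply H; left; auto |].
  apply Rsum_ge_elem; [intros; left; apply H; auto | left; auto].
Qed.

Lemma Rpower_pos x y : 0 < Rpower x y.
Proof. unfold Rpower; apply exp_pos. Qed.

Lemma Rpower_le_neg a b e : 0 <= e -> 0 < a <= b -> Rpower b (- e) <= Rpower a (- e).
Proof.
  intros He Hab. rewrite !Rpower_Ropp. apply Rinv_le_contravar; [apply Rpower_pos |].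
  apply Rle_Rpower_l; auto.
Qed.

Lemma Rpower_inv_exponent x a : 0 < x -> a <> 0 -> Rpower (Rpower x (- / a)) (- a) = x.
Proof.
  intros Hx Ha. rewrite Rpower_mult. replace (- / a * - a) with 1 by (field; lra).
  apply Rpower_1; auto.
Qed.

Lemma Rpower_minus_one y : 0 < y -> Rpower y (-1) = / y.
Proof.
  intros; replace (-1) with (- (1)) by ring. rewrite Rpower_Ropp, Rpower_1; auto.
Qed.

Lemma Rpower_base_one x : Rpower 1 x = 1.
Proof. unfold Rpower; rewrite ln_1, Rmult_0_r, exp_0; auto. Qed.

Lemma list_upd_length q i x : length (list_upd q i x) = length q.
Proof. revert i; induction q; intros [|i]; simpl; auto. Qed.

Lemma coord_upd q i x j : (i < length q)%nat ->
  coord (list_upd q i x) j = if Nat.eqb j i then x else coord q j.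
Proof.
  unfold coord. revert i j; induction q as [|h t IH]; intros i j Hi; simpl in Hi; [lia |].
  destruct i as [|i]; destruct j as [|j]; simpl; auto. apply IH; lia.
Qed.

Lemma inQN_cons n qbar h t : inQN (S n) qbar (h :: t) <->
  ((- Z.of_nat qbar <= h <= Z.of_nat qbar)%Z /\ inQN n qbar t).
Proof.
  unfold inQN; simpl. split.
  - intros [Hl H]. split; [apply (H O); lia |]. split; [lia |].
    intros i Hi. apply (H (S i)); lia.
  - intros [Hh [Hl H]]. split; [lia |]. intros [|i] Hi; [exact Hh | apply H; lia].
Qed.

Lemma uniform_bound_interval (P : Z -> R -> Prop) lo (n : nat) :
  (forall h M M', P h M -> M <= M' -> P h M') ->
  (forall h, (lo <= h <= lo + Z.of_nat n)%Z -> exists M, P h M) ->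
  exists M, forall h, (lo <= h <= lo + Z.of_nat n)%Z -> P h M.
Proof.
  intros Hm. induction n; intros H.
  - destruct (H lo) as [M HM]; [lia |]. exists M. intros h Hh. replace h with lo by lia. auto.
  - destruct IHn as [M1 H1]; [intros h Hh; apply H; lia |].
    destruct (H (lo + Z.of_nat (S n))%Z) as [M2 H2]; [lia |].
    exists (Rmax M1 M2). intros h Hh.
    destruct (Z.eq_dec h (lo + Z.of_nat (S n))%Z) as [->|Hne].
    + eapply Hm; [eauto | apply Rmax_r].
    + eapply Hm; [apply H1; lia | apply Rmax_l].
Qed.

Lemma uniform_bound_QN N qbar (P : list Z -> R -> Prop) :
  (forall q M M', P q M -> M <= M' -> P q M') ->
  (forall q, inQN N qbar q -> exists M, P q M) ->
  exists M, forall q, inQN N qbar q -> P q M.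
Proof.
  revert P. induction N as [|n IH]; intros P Hm H.
  - destruct (H []) as [M HM]; [split; simpl; auto; intros; lia |].
    exists M. intros q [Hq _]. destruct q; simpl in Hq; [auto | lia].
  - assert (Hh : forall h, (- Z.of_nat qbar <= h <= - Z.of_nat qbar + Z.of_nat (2 * qbar))%Z ->
        exists M, forall t, inQN n qbar t -> P (h :: t) M).
    { intros h Hh. apply (IH (fun t M => P (h :: t) M)); [intros; eapply Hm; eauto |].
      intros t Ht. apply H. apply inQN_cons. split; auto. lia. }
    destruct (uniform_bound_interval (fun h M => forall t, inQN n qbar t -> P (h :: t) M) _ _
      ltac:(intros h0 M0 M1 HM0 HM1 t Ht; eapply Hm; [apply HM0; auto | auto]) Hh) as [M HM].
    exists M. intros q Hq. destruct q as [|h t]; [destruct Hq as [Hl _]; simpl in Hl; lia |].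
    apply inQN_cons in Hq. destruct Hq as [Hh1 Ht]. apply HM; auto. lia.
Qed.

Lemma QN_nonempty N qbar : inQN N qbar (repeat 0%Z N).
Proof.
  split; [apply repeat_length |]. intros i Hi. unfold coord. rewrite nth_repeat. lia.
Qed.

Lemma abs_bound_QN N qbar (f : list Z -> R) :
  exists M, 0 <= M /\ forall q, inQN N qbar q -> Rabs (f q) <= M.
Proof.
  destruct (uniform_bound_QN N qbar (fun q M => Rabs (f q) <= M)) as [M HM].
  - intros; lra.
  - intros q _. exists (Rabs (f q)). lra.
  - exists M. split; auto. eapply Rle_trans; [apply Rabs_pos | apply (HM _ (QN_nonempty N qbar))].
Qed.

(** The power mean [H_l(g) = (sum_{i in l} g_i^(-1/alpha))^(-alpha)] of a
    positive vector.  It is monotone, positively homogeneous and bounded by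
    each entry, hence 1-Lipschitz for the sup norm. *)
Section PowerMean.
Variable alpha : R.
Hypothesis alpha_pos : 0 < alpha.

Definition power_mean (l : list nat) (g : nat -> R) : R :=
  Rpower (Rsum l (fun i => Rpower (g i) (- / alpha))) (- alpha).

Lemma power_mean_pos l g : 0 < power_mean l g.
Proof. apply Rpower_pos. Qed.

Lemma power_mean_ext l g g' : (forall i, In i l -> g i = g' i) ->
  power_mean l g = power_mean l g'.
Proof. intros H; unfold power_mean; f_equal; apply Rsum_ext; intros; rewrite H; auto. Qed.

Lemma power_mean_le_entry l g j : In j l -> 0 < g j -> power_mean l g <= g j.
Proof.
  intros Hj Hg. unfold power_mean.
  rewrite <- (Rpower_inv_exponent (g j) alpha Hg ltac:(lra)).
  apply Rpower_le_neg; [lra |]. split; [apply Rpower_pos |].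
  apply (Rsum_ge_elem l (fun i => Rpower (g i) (- / alpha))); auto.
  intros; left; apply Rpower_pos.
Qed.

Lemma power_mean_mono l g g' : (forall i, In i l -> 0 < g i <= g' i) ->
  power_mean l g <= power_mean l g'.
Proof.
  intros H. unfold power_mean. destruct l as [|a l0]; [simpl; lra |].
  apply Rpower_le_neg; [lra |]. split.
  - apply Rsum_pos; [congruence | intros; apply Rpower_pos].
  - apply Rsum_le. intros i Hi. apply Rpower_le_neg; [left; apply Rinv_0_lt_compat; lra |].
    apply H; auto.
Qed.

Lemma power_mean_hom l g c : l <> [] -> 0 < c -> (forall i, In i l -> 0 < g i) ->
  power_mean l (fun i => c * g i) = c * power_mean l g.
Proof.
  intros Hl0 Hc0 Hg. unfold power_mean.
  rewrite (Rsum_ext l _ (fun i => Rpower c (- / alpha) * Rpower (g i) (- / alpha)))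
    by (intros i Hi; rewrite Rpower_mult_distr; auto).
  rewrite Rsum_scal.
  assert (0 < Rsum l (fun i => Rpower (g i) (- / alpha)))
    by (apply Rsum_pos; auto; intros; apply Rpower_pos).
  rewrite <- Rpower_mult_distr; auto; [| apply Rpower_pos].
  f_equal. apply Rpower_inv_exponent; auto; lra.
Qed.

Lemma power_mean_shift_le l g g' d : l <> [] -> 0 <= d ->
  (forall i, In i l -> 0 < g i /\ 0 < g' i /\ g' i <= g i + d) ->
  power_mean l g' <= power_mean l g + d.
Proof.
  intros Hl0 Hd H. set (m := power_mean l g). assert (Hm : 0 < m) by apply power_mean_pos.
  assert (Hdm : 0 <= d / m) by (apply Rmult_le_pos; [lra | left; apply Rinv_0_lt_compat; lra]).
  apply Rle_trans with (power_mean l (fun i => (1 + d / m) * g i)).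
  - apply power_mean_mono. intros i Hi. destruct (H i Hi) as [Hg1 [Hg2 Hg3]]. split; auto.
    assert (m <= g i) by (apply power_mean_le_entry; auto).
    assert (d <= d / m * g i).
    { apply Rle_trans with (d / m * m); [right; field; lra |].
      apply Rmult_le_compat_l; auto. }
    lra.
  - rewrite power_mean_hom; auto; [| lra | intros i Hi; apply H; auto].
    fold m. right; field; lra.
Qed.

Lemma power_mean_lip l g g' d : 0 <= d ->
  (forall i, In i l -> 0 < g i /\ 0 < g' i /\ Rabs (g i - g' i) <= d) ->
  Rabs (power_mean l g - power_mean l g') <= d.
Proof.
  intros Hd H. destruct l as [|j l'].
  { unfold power_mean; simpl. rewrite Rminus_diag, Rabs_R0; auto. }
  assert (A1 : power_mean (j :: l') g' <= power_mean (j :: l') g + d).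
  { apply power_mean_shift_le; auto; [congruence |]. intros i Hi.
    destruct (H i Hi) as [? [? Ha]]. repeat split; auto.
    revert Ha; unfold Rabs; destruct Rcase_abs; lra. }
  assert (A2 : power_mean (j :: l') g <= power_mean (j :: l') g' + d).
  { apply power_mean_shift_le; auto; [congruence |]. intros i Hi.
    destruct (H i Hi) as [? [? Ha]]. repeat split; auto.
    revert Ha; unfold Rabs; destruct Rcase_abs; lra. }
  unfold Rabs; destruct Rcase_abs; lra.
Qed.

End PowerMean.
(** Picard-Lindelof for a system [z' = F z], [z 0 = z0] whose unknown is a
    function [X -> R] constrained on a set [D] of coordinates, with [F]
    Lipschitz for the sup norm over [D]. *)
Section Picard.
Variables (X : Type) (D : X -> Prop) (F : (X -> R) -> X -> R) (z0 : X -> R) (T L B1 : R).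
Hypotheses (HT : 0 < T) (HL : 0 <= L) (HB1 : 0 <= B1).
Hypothesis F_lip : forall x y d, 0 <= d -> (forall q, D q -> Rabs (x q - y q) <= d) ->
  forall q, D q -> Rabs (F x q - F y q) <= L * d.
Hypothesis F_z0 : forall q, D q -> Rabs (F z0 q) <= B1.

Definition ode_solution (y : R -> X -> R) : Prop :=
  (forall q, D q -> y 0 q = z0 q) /\
  (forall q, D q -> forall s, 0 < s < T -> is_derive (fun s => y s q) s (F (y s) q)) /\
  (forall q, D q -> forall s, 0 <= s <= T -> cont_within (fun s => y s q) 0 T s).

(** Uniqueness: two solutions at bounded distance coincide, since the
    weighted Gronwall estimate halves any bound on their distance. *)
Lemma ode_solution_unique y1 y2 : ode_solution y1 -> ode_solution y2 ->
  (exists K0, forall q, D q -> forall s, 0 <= s <= T -> Rabs (y1 s q - y2 s q) <= K0) ->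
  forall q, D q -> forall s, 0 <= s <= T -> y1 s q = y2 s q.
Proof.
  intros [I1 [D1 C1]] [I2 [D2 C2]] [K0 HK0].
  assert (Hhalf : forall n q, D q -> forall s, 0 <= s <= T ->
            Rabs (y1 s q - y2 s q) <= K0 * (/ 2) ^ n * exp (2 * L * s)).
  { induction n as [|n IH]; intros q Hq s Hs.
    - assert (0 <= K0) by (eapply Rle_trans; [apply Rabs_pos | apply (HK0 q Hq s Hs)]).
      simpl pow. rewrite Rmult_1_r. eapply Rle_trans; [apply (HK0 q Hq s Hs) |].
      rewrite <- (Rmult_1_r K0) at 1. apply Rmult_le_compat_l; auto.
      pose proof (exp_lin_mono (2 * L) 0 s ltac:(lra) ltac:(lra)) as He.
      rewrite Rmult_0_r, exp_0 in He. exact He.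
    - assert (HK : 0 <= K0 * (/ 2) ^ n).
      { pose proof (half_pow_pos n).
        assert (0 <= K0) by (eapply Rle_trans; [apply Rabs_pos | apply (HK0 q Hq s Hs)]).
        nra. }
      eapply Rle_trans.
      + apply (weighted_gronwall (fun s => y1 s q - y2 s q)
                 (fun s => F (y1 s) q - F (y2 s) q) T L (K0 * (/ 2) ^ n)); auto.
        * rewrite I1, I2; auto; ring.
        * intros x Hx. split; [apply (is_derive_minus (fun s => y1 s q) (fun s => y2 s q)); auto |].
          rewrite Rmult_assoc. apply F_lip; auto; [| intros q' Hq'; apply IH; auto; lra].
          pose proof (exp_pos (2 * L * x)). apply Rmult_le_pos; lra.
        * intros x Hx. apply cont_within_minus; auto; lra.
      + simpl pow. right; field. }
  intros q Hq s Hs.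
  apply (eq_of_geometric _ _ (Rabs K0 * exp (2 * L * s))).
  - apply Rmult_le_pos; [apply Rabs_pos | left; apply exp_pos].
  - intros n. eapply Rle_trans; [apply Hhalf; auto |].
    pose proof (half_pow_pos n). pose proof (exp_pos (2 * L * s)).
    pose proof (Rle_abs K0).
    replace (K0 * (/ 2) ^ n * exp (2 * L * s)) with (K0 * (exp (2 * L * s) * (/ 2) ^ n)) by ring.
    replace (Rabs K0 * exp (2 * L * s) * (/ 2) ^ n) with (Rabs K0 * (exp (2 * L * s) * (/ 2) ^ n)) by ring.
    apply Rmult_le_compat_r; auto. left; apply Rmult_lt_0_compat; auto.
Qed.

(** Picard iterates; time is clamped to [0, T] inside the integral so that
    every iterate is defined and differentiable on the whole line. *)
Fixpoint picard (n : nat) : R -> X -> R :=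
  match n with
  | O => fun _ q => z0 q
  | S m => fun t q => z0 q + RInt (fun s => F (picard m (clamp 0 T s)) q) 0 t
  end.

Lemma picard_S_0 n q : picard (S n) 0 q = z0 q.
Proof. simpl. rewrite RInt_point. unfold zero; simpl. ring. Qed.

Definition lipschitz_in_time (y : R -> X -> R) (B : R) : Prop :=
  forall q, D q -> forall a b, Rabs (y a q - y b q) <= B * Rabs (a - b).

(** If the [n]-th iterate is Lipschitz in time, the integrand defining the
    next one is continuous, so the next iterate differentiates to it. *)
Lemma picard_deriv n Bn : 0 <= Bn -> lipschitz_in_time (picard n) Bn ->
  forall q, D q -> forall t,
    is_derive (fun t => picard (S n) t q) t (F (picard n (clamp 0 T t)) q).
Proof.
  intros HB Hlip q Hq t.
  set (f := fun s => F (picard n (clamp 0 T s)) q).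
  assert (Hfc : forall x, continuous f x).
  { intros x. apply (proj1 (continuity_pt_filterlim _ _)).
    apply lipschitz_continuous with (L * Bn); [apply Rmult_le_pos; auto |].
    intros a b. unfold f. rewrite Rmult_assoc.
    apply F_lip; auto; [apply Rmult_le_pos; auto; apply Rabs_pos |].
    intros q' Hq'. eapply Rle_trans; [apply Hlip; auto |].
    apply Rmult_le_compat_l; auto. apply clamp_lip; lra. }
  change (is_derive (fun t => z0 q + RInt f 0 t) t (f t)).
  replace (f t) with (0 + f t) by ring.
  apply (is_derive_plus (fun _ => z0 q) (fun t => RInt f 0 t)); [auto_derive; auto |].
  apply (is_derive_RInt f (fun t => RInt f 0 t) 0 t); auto.
  apply filter_forall. intros b. apply (RInt_correct f 0 b).
  apply (ex_RInt_continuous f). intros; apply Hfc.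
Qed.

(** Constants of the scheme: every iterate stays in the ball of radius
    [radius] around [z0], hence moves at speed at most [speed]. *)
Definition step0 : R := B1 * T + 1.
Definition radius : R := 2 * step0 * exp (2 * L * T).
Definition speed : R := B1 + L * radius.

Lemma step0_pos : 0 < step0.
Proof. unfold step0. nra. Qed.

Lemma radius_nonneg : 0 <= radius.
Proof. unfold radius. pose proof step0_pos. pose proof (exp_pos (2 * L * T)). nra. Qed.

Lemma speed_nonneg : 0 <= speed.
Proof. unfold speed. pose proof radius_nonneg. nra. Qed.

Lemma F_bound x q : D q -> (forall q', D q' -> Rabs (x q' - z0 q') <= radius) ->
  Rabs (F x q) <= speed.
Proof.
  intros Hq H. pose proof (F_lip x z0 radius radius_nonneg H q Hq). pose proof (F_z0 q Hq).
  unfold speed. replace (F x q) with ((F x q - F z0 q) + F z0 q) by ring.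
  eapply Rle_trans; [apply Rabs_triang | lra].
Qed.

Definition picard_inv (n : nat) : Prop :=
  lipschitz_in_time (picard n) speed /\
  (forall q, D q -> forall t, 0 <= t <= T ->
     Rabs (picard n t q - z0 q) <= 2 * step0 * (1 - (/ 2) ^ n) * exp (2 * L * t)) /\
  (forall q, D q -> forall t, 0 <= t <= T ->
     Rabs (picard (S n) t q - picard n t q) <= step0 * (/ 2) ^ n * exp (2 * L * t)).

Lemma picard_in_radius n :
  (forall q, D q -> forall t, 0 <= t <= T ->
     Rabs (picard n t q - z0 q) <= 2 * step0 * (1 - (/ 2) ^ n) * exp (2 * L * t)) ->
  forall q, D q -> forall t, Rabs (picard n (clamp 0 T t) q - z0 q) <= radius.
Proof.
  intros H q Hq t. pose proof (clamp_in 0 T t ltac:(lra)) as Ht.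
  eapply Rle_trans; [apply H; auto |]. unfold radius.
  pose proof (half_pow_pos n). pose proof step0_pos.
  pose proof (exp_lin_mono (2 * L) _ _ ltac:(lra) (proj2 Ht)).
  pose proof (exp_pos (2 * L * clamp 0 T t)).
  apply Rle_trans with (2 * step0 * 1 * exp (2 * L * clamp 0 T t)).
  - apply Rmult_le_compat_r; [lra |]. apply Rmult_le_compat_l; lra.
  - rewrite Rmult_1_r. apply Rmult_le_compat_l; lra.
Qed.

Lemma picard_inv_0 : picard_inv 0.
Proof.
  split; [| split].
  - intros q _ a b. simpl. rewrite Rminus_diag, Rabs_R0.
    apply Rmult_le_pos; [apply speed_nonneg | apply Rabs_pos].
  - intros q _ t _. simpl. rewrite Rminus_diag, Rabs_R0. lra.
  - intros q Hq t Ht.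
    assert (Hd := picard_deriv 0 0 ltac:(lra)
                    ltac:(intros q' _ a b; simpl; rewrite Rminus_diag, Rabs_R0; lra) q Hq).
    pose proof (lipschitz_of_deriv (fun t => picard 1 t q)
                  (fun t => F (picard 0 (clamp 0 T t)) q) B1 Hd
                  ltac:(intros; apply F_z0; auto) t 0) as H.
    cbv beta in H. rewrite picard_S_0 in H. simpl picard at 2. rewrite Rminus_0_r in H.
    eapply Rle_trans; [apply H |]. simpl pow. rewrite Rmult_1_r.
    pose proof (exp_lin_mono (2 * L) 0 t ltac:(lra) ltac:(lra)) as He.
    rewrite Rmult_0_r, exp_0 in He. rewrite Rabs_pos_eq by lra. unfold step0.
    apply Rle_trans with (B1 * T + 1); [nra |].
    rewrite <- (Rmult_1_r (B1 * T + 1)) at 1. apply Rmult_le_compat_l; nra.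
Qed.

Lemma picard_inv_S n : picard_inv n -> picard_inv (S n).
Proof.
  intros [L1 [L2 L3]].
  assert (Hd := picard_deriv n speed speed_nonneg L1).
  assert (L1' : lipschitz_in_time (picard (S n)) speed).
  { intros q Hq a b.
    apply (lipschitz_of_deriv (fun t => picard (S n) t q)
             (fun t => F (picard n (clamp 0 T t)) q) speed (Hd q Hq)).
    intros t. apply F_bound; auto. intros q' Hq'. apply picard_in_radius; auto. }
  split; [exact L1' | split].
  - intros q Hq t Ht. specialize (L2 q Hq t Ht). specialize (L3 q Hq t Ht).
    replace (picard (S n) t q - z0 q)
      with ((picard (S n) t q - picard n t q) + (picard n t q - z0 q)) by ring.
    eapply Rle_trans; [apply Rabs_triang |]. simpl pow. lra.
  - intros q Hq t Ht.
    assert (Hd' := picard_deriv (S n) speed speed_nonneg L1').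
    pose proof step0_pos. pose proof (half_pow_pos n).
    eapply Rle_trans.
    + apply (weighted_gronwall (fun t => picard (S (S n)) t q - picard (S n) t q)
               (fun t => F (picard (S n) (clamp 0 T t)) q - F (picard n (clamp 0 T t)) q)
               T L (step0 * (/ 2) ^ n)); auto.
      * nra.
      * rewrite !picard_S_0; ring.
      * intros x Hx. split.
        -- apply (is_derive_minus (fun t => picard (S (S n)) t q) (fun t => picard (S n) t q)); auto.
        -- rewrite !clamp_id by lra. rewrite Rmult_assoc. apply F_lip; auto.
           ++ pose proof (exp_pos (2 * L * x)). apply Rmult_le_pos; [nra | lra].
           ++ intros q' Hq'. apply L3; auto; lra.
      * intros x Hx. eapply is_derive_cont_within.
        apply (is_derive_minus (fun t => picard (S (S n)) t q) (fun t => picard (S n) t q)); auto.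
    + simpl pow. right; field.
Qed.

Lemma picard_inv_all n : picard_inv n.
Proof. induction n; [apply picard_inv_0 | apply picard_inv_S; auto]. Qed.

Definition picard_lim (t : R) (q : X) : R := real (Lim_seq (fun n => picard n t q)).

Let E := exp (2 * L * T).

Lemma picard_lim_approx q t n : D q -> 0 <= t <= T ->
  Rabs (picard n t q - picard_lim t q) <= 2 * step0 * E * (/ 2) ^ n.
Proof.
  intros Hq Ht. unfold picard_lim.
  eapply Rle_trans.
  - apply (geometric_limit (fun n => picard n t q) (step0 * exp (2 * L * t))).
    intros m. destruct (picard_inv_all m) as [_ [_ L3]].
    eapply Rle_trans; [apply L3; auto | right; ring].
  - pose proof (exp_lin_mono (2 * L) t T ltac:(lra) ltac:(lra)). pose proof step0_pos.
    pose proof (half_pow_pos n). unfold E.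
    apply Rmult_le_compat_r; [lra |]. rewrite <- Rmult_assoc.
    apply Rmult_le_compat_l; lra.
Qed.

Lemma E_pos : 0 < E.
Proof. apply exp_pos. Qed.

Lemma picard_lim_initial q : D q -> picard_lim 0 q = z0 q.
Proof.
  intros Hq. pose proof step0_pos. pose proof E_pos.
  symmetry. apply (eq_of_geometric _ _ (2 * step0 * E)); [nra |]. intros n.
  destruct n as [|n].
  - apply (picard_lim_approx q 0 0); auto; lra.
  - rewrite <- (picard_S_0 n q). apply picard_lim_approx; auto; lra.
Qed.

Lemma picard_lim_lipschitz q a b : D q -> 0 <= a <= T -> 0 <= b <= T ->
  Rabs (picard_lim a q - picard_lim b q) <= speed * Rabs (a - b).
Proof.
  intros Hq Ha Hb. pose proof step0_pos. pose proof E_pos.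
  apply (le_of_geometric _ _ (4 * step0 * E)); [nra |].
  intros n. destruct (picard_inv_all n) as [L1 _].
  pose proof (picard_lim_approx q a n Hq Ha). pose proof (picard_lim_approx q b n Hq Hb).
  pose proof (L1 q Hq a b).
  replace (picard_lim a q - picard_lim b q) with
    (- (picard n a q - picard_lim a q) + (picard n a q - picard n b q)
     + (picard n b q - picard_lim b q)) by ring.
  eapply Rle_trans; [apply Rabs_triang |].
  eapply Rle_trans; [apply Rplus_le_compat_r; apply Rabs_triang |].
  rewrite Rabs_Ropp. lra.
Qed.

Lemma picard_lim_in_radius q t : D q -> 0 <= t <= T ->
  Rabs (picard_lim t q - z0 q) <= radius.
Proof.
  intros Hq Ht. pose proof step0_pos. pose proof E_pos.
  apply (le_of_geometric _ _ (2 * step0 * E)); [nra |].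
  intros n. destruct (picard_inv_all n) as [_ [L2 _]].
  pose proof (picard_in_radius n L2 q Hq t) as H1. rewrite clamp_id in H1 by lra.
  pose proof (picard_lim_approx q t n Hq Ht).
  replace (picard_lim t q - z0 q)
    with (- (picard n t q - picard_lim t q) + (picard n t q - z0 q)) by ring.
  eapply Rle_trans; [apply Rabs_triang |]. rewrite Rabs_Ropp. lra.
Qed.

Lemma picard_iterate_taylor n q t s : D q -> 0 <= t <= T -> 0 <= s <= T ->
  Rabs (picard (S n) s q - picard (S n) t q - F (picard_lim t) q * (s - t)) <=
  L * (2 * step0 * E * (/ 2) ^ n + speed * Rabs (s - t)) * Rabs (s - t).
Proof.
  intros Hq Ht Hs. destruct (picard_inv_all n) as [L1 _].
  pose proof step0_pos. pose proof E_pos. pose proof speed_nonneg.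
  pose proof (half_pow_pos n). pose proof (Rabs_pos (s - t)).
  apply (mean_value_bound (fun t => picard (S n) t q)
           (fun t => F (picard n (clamp 0 T t)) q) t s); [apply (picard_deriv n speed); auto |].
  intros c0 Hc0.
  assert (Hc0' : 0 <= c0 <= T) by (unfold Rmin, Rmax in Hc0; destruct Rle_dec; lra).
  assert (Hct : Rabs (c0 - t) <= Rabs (s - t)).
  { unfold Rmin, Rmax in Hc0; destruct Rle_dec; unfold Rabs; repeat destruct Rcase_abs; lra. }
  rewrite clamp_id by lra. apply F_lip; auto.
  - apply Rplus_le_le_0_compat; [left; repeat apply Rmult_lt_0_compat; lra |].
    apply Rmult_le_pos; lra.
  - intros q' Hq'. pose proof (picard_lim_approx q' c0 n Hq' Hc0').
    pose proof (picard_lim_lipschitz q' c0 t Hq' Hc0' Ht).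
    replace (picard n c0 q' - picard_lim t q')
      with ((picard n c0 q' - picard_lim c0 q') + (picard_lim c0 q' - picard_lim t q')) by ring.
    eapply Rle_trans; [apply Rabs_triang |].
    assert (speed * Rabs (c0 - t) <= speed * Rabs (s - t)) by (apply Rmult_le_compat_l; lra).
    lra.
Qed.

Lemma picard_lim_taylor q t s : D q -> 0 <= t <= T -> 0 <= s <= T ->
  Rabs (picard_lim s q - picard_lim t q - F (picard_lim t) q * (s - t))
  <= L * speed * Rabs (s - t) * Rabs (s - t).
Proof.
  intros Hq Ht Hs. pose proof step0_pos. pose proof E_pos. pose proof speed_nonneg.
  pose proof (Rabs_pos (s - t)).
  assert (Hst : Rabs (s - t) <= T) by (unfold Rabs; destruct Rcase_abs; lra).
  apply (le_of_geometric _ _ (2 * step0 * E + 2 * L * step0 * E * T)).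
  { assert (0 <= L * step0 * E * T) by (repeat apply Rmult_le_pos; lra). nra. }
  intros n. set (a := (/ 2) ^ n). assert (Ha : 0 < a) by apply half_pow_pos.
  pose proof (picard_iterate_taylor n q t s Hq Ht Hs) as Hn. fold a in Hn.
  pose proof (picard_lim_approx q s (S n) Hq Hs) as Hs'.
  pose proof (picard_lim_approx q t (S n) Hq Ht) as Ht'.
  simpl pow in Hs', Ht'. fold a in Hs', Ht'.
  replace (picard_lim s q - picard_lim t q - F (picard_lim t) q * (s - t)) with
    (- (picard (S n) s q - picard_lim s q) + (picard (S n) t q - picard_lim t q)
     + (picard (S n) s q - picard (S n) t q - F (picard_lim t) q * (s - t))) by ring.
  eapply Rle_trans; [apply Rabs_triang |].
  eapply Rle_trans; [apply Rplus_le_compat_r; apply Rabs_triang |].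
  rewrite Rabs_Ropp.
  assert (L * (2 * step0 * E * a) * Rabs (s - t) <= 2 * L * step0 * E * T * a).
  { replace (2 * L * step0 * E * T * a) with (L * (2 * step0 * E * a) * T) by ring.
    apply Rmult_le_compat_l; auto. repeat apply Rmult_le_pos; lra. }
  nra.
Qed.

Lemma picard_lim_deriv q t : D q -> 0 <= t <= T ->
  deriv_within (fun s => picard_lim s q) 0 T t (F (picard_lim t) q).
Proof.
  intros Hq Ht. apply lin_approx_deriv_within. intros eps Heps.
  pose proof speed_nonneg.
  exists (eps / (L * speed + 1)). split; [apply Rdiv_lt_0_compat; nra |].
  intros s Hs Hst. pose proof (Rabs_pos (s - t)).
  eapply Rle_trans; [apply picard_lim_taylor; auto |]. apply Rmult_le_compat_r; auto.
  apply Rle_trans with ((L * speed + 1) * (eps / (L * speed + 1))); [| right; field; nra].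
  apply Rmult_le_compat; nra.
Qed.

Lemma picard_lim_solution : ode_solution picard_lim.
Proof.
  split; [exact picard_lim_initial | split].
  - intros q Hq s Hs. apply deriv_within_interior with 0 T; auto.
    apply picard_lim_deriv; auto; lra.
  - intros q Hq s Hs. eapply deriv_within_cont. apply picard_lim_deriv; auto.
Qed.

End Picard.
Section Model.
Variables (N qbar : nat) (T A k sigma c varpi eta : R) (gamma : nat -> R).
Hypotheses (HT : 0 < T) (HA : 0 < A) (Hk : 0 < k) (Hsigma : 0 < sigma)
  (Hvarpi : 0 < varpi) (Heta : 0 < eta) (Hgamma : forall i, (i < N)%nat -> 0 < gamma i).

(** The exponent of the equation; the substitution [v = - z^(-1/alpha)]
    turns the equation into a Lipschitz system for [z]. *)
Definition alpha : R := k * varpi / (sigma * eta).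

Lemma alpha_pos : 0 < alpha.
Proof. unfold alpha. apply Rdiv_lt_0_compat; apply Rmult_lt_0_compat; auto. Qed.

(** The constant [C] of the equation; only its sign matters here. *)
Definition Cst : R := Cconst N A k sigma c varpi eta gamma.

Lemma Cst_nonneg : 0 <= Cst.
Proof.
  unfold Cst, Cconst.
  assert (Hkv : 0 < k * varpi) by (apply Rmult_lt_0_compat; auto).
  assert (0 <= Rsum (idx N) (fun i => / (k * varpi + sigma * gamma i))).
  { apply Rsum_nonneg. intros i Hi. unfold idx in Hi. apply in_seq in Hi.
    pose proof (Hgamma i ltac:(lia)). left. apply Rinv_0_lt_compat.
    pose proof (Rmult_lt_0_compat _ _ Hsigma H). lra. }
  pose proof (Rmult_lt_0_compat _ _ Hsigma Heta). pose proof (Rmult_lt_0_compat _ _ Heta Hsigma).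
  set (S := 1 + eta * sigma * Rsum (idx N) (fun i => / (k * varpi + sigma * gamma i))).
  assert (0 < S) by (unfold S; nra).
  set (E := exp _). assert (0 < E) by apply exp_pos.
  assert (0 < sigma * eta / (k * varpi + sigma * eta)) by (apply Rdiv_lt_0_compat; lra).
  left. repeat apply Rmult_lt_0_compat; auto. apply Rinv_0_lt_compat; lra.
Qed.

Definition QN (q : list Z) : Prop := inQN N qbar q.
Definition CSq (q : list Z) : R := CS N sigma eta gamma q.
Definition act (phi : Z) (q : list Z) : list nat := act_idx N qbar gamma phi q.

Lemma neighbour_QN phi q i : QN q -> (phi = 1 \/ phi = -1)%Z -> In i (act phi q) ->
  QN (qminus q i phi).
Proof.
  intros [Hlen Hq] Hphi Hi.
  unfold act, act_idx, Gset, idx in Hi. apply filter_In in Hi. destruct Hi as [Hi Hb].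
  apply filter_In in Hi. destruct Hi as [Hi _]. apply in_seq in Hi. apply Z.ltb_lt in Hb.
  unfold QN, inQN, qminus. rewrite list_upd_length. split; auto.
  intros j Hj. rewrite coord_upd by lia. destruct (Nat.eqb_spec j i) as [->|].
  - specialize (Hq i ltac:(lia)). destruct Hphi as [-> | ->]; lia.
  - apply Hq; auto.
Qed.

Definition nb_mean (phi : Z) (q : list Z) (x : list Z -> R) : R :=
  match act phi q with
  | [] => 0
  | _ => power_mean alpha (act phi q) (fun i => x (qminus q i phi))
  end.

Lemma nb_mean_nonneg phi q x : 0 <= nb_mean phi q x.
Proof. unfold nb_mean. destruct (act phi q); [lra | left; apply power_mean_pos]. Qed.

Lemma nb_mean_ext phi q x y : QN q -> (phi = 1 \/ phi = -1)%Z ->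
  (forall q', QN q' -> x q' = y q') -> nb_mean phi q x = nb_mean phi q y.
Proof.
  intros Hq Hphi H. unfold nb_mean.
  destruct (act phi q) eqn:E; auto. rewrite <- E.
  apply power_mean_ext. intros i Hi. apply H, neighbour_QN; auto.
Qed.

Lemma nb_mean_lip phi q x y d : QN q -> (phi = 1 \/ phi = -1)%Z -> 0 <= d ->
  (forall q', QN q' -> 0 < x q' /\ 0 < y q' /\ Rabs (x q' - y q') <= d) ->
  Rabs (nb_mean phi q x - nb_mean phi q y) <= d.
Proof.
  intros Hq Hphi Hd H. unfold nb_mean.
  destruct (act phi q) eqn:E; [rewrite Rminus_diag, Rabs_R0; auto |]. rewrite <- E.
  apply power_mean_lip; [apply alpha_pos | auto |].
  intros i Hi. apply H, neighbour_QN; auto.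
Qed.

(** The ratio appearing in the equation, written in the new unknown. *)
Lemma ratio_power_mean (l : list nat) (u g : nat -> R) (vq y : R) : l <> [] -> 0 < y ->
  vq = - Rpower y (- / alpha) -> (forall i, In i l -> u i = - Rpower (g i) (- / alpha)) ->
  Rsum l u <> 0 /\ 0 < vq / Rsum l u /\
  Rpower (vq / Rsum l u) alpha = / y * power_mean alpha l g.
Proof.
  intros Hl0 Hy Hv Hu. pose proof alpha_pos.
  rewrite (Rsum_ext l u (fun i => -1 * Rpower (g i) (- / alpha)))
    by (intros i Hi; rewrite Hu; auto; ring).
  rewrite Rsum_scal.
  set (S := Rsum l (fun i => Rpower (g i) (- / alpha))).
  assert (HS : 0 < S) by (apply Rsum_pos; auto; intros; apply Rpower_pos).
  pose proof (Rpower_pos y (- / alpha)).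
  replace (vq / (-1 * S)) with (Rpower y (- / alpha) * / S) by (rewrite Hv; field; lra).
  split; [lra |]. split; [apply Rmult_lt_0_compat; auto; apply Rinv_0_lt_compat; auto |].
  rewrite <- Rpower_mult_distr; auto; [| apply Rinv_0_lt_compat; auto].
  rewrite Rpower_mult. unfold power_mean. fold S. f_equal.
  - replace (- / alpha * alpha) with (- (1)) by (field; lra).
    rewrite Rpower_Ropp, Rpower_1; auto.
  - unfold Rpower. rewrite ln_Rinv; auto. f_equal; ring.
Qed.

Lemma jterm_transform (v : R -> list Z -> R) (x : list Z -> R) t phi q :
  QN q -> (phi = 1 \/ phi = -1)%Z -> (forall q', QN q' -> 0 < x q') ->
  (forall q', QN q' -> v t q' = - Rpower (x q') (- / alpha)) ->
  jterm_welldef N qbar gamma v t phi q /\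
  jterm N qbar k sigma varpi eta gamma v t phi q = / x q * nb_mean phi q x.
Proof.
  intros Hq Hphi Hpos Hv. unfold jterm_welldef, jterm, denom, nb_mean. fold (act phi q).
  destruct (act phi q) as [|j l] eqn:E; [split; [intros H; congruence | ring] |].
  rewrite <- E.
  destruct (ratio_power_mean (act phi q) (fun i => v t (qminus q i phi))
              (fun i => x (qminus q i phi)) (v t q) (x q)) as [H1 [H2 H3]].
  - rewrite E; congruence.
  - apply Hpos; auto.
  - apply Hv; auto.
  - intros i Hi. apply Hv, neighbour_QN; auto.
  - split; [intros _; split; auto |]. exact H3.
Qed.

Definition mean_term (x : list Z -> R) (q : list Z) : R :=
  alpha * Cst * (nb_mean 1 q x + nb_mean (-1) q x).

Lemma mean_term_nonneg x q : 0 <= mean_term x q.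
Proof.
  unfold mean_term. pose proof alpha_pos. pose proof Cst_nonneg.
  pose proof (nb_mean_nonneg 1 q x). pose proof (nb_mean_nonneg (-1) q x).
  apply Rmult_le_pos; [apply Rmult_le_pos |]; lra.
Qed.

(** The transformed equation is [z' = drift z] in reversed time. *)
Definition drift (x : list Z -> R) (q : list Z) : R :=
  - alpha * CSq q * x q + mean_term x q.

(** Solutions stay above [floor q]; below it the means are evaluated at
    [floor], which makes the modified field [lifted_drift] globally Lipschitz. *)
Definition floor (q : list Z) : R := exp (- alpha * Rabs (CSq q) * T) / 2.

Lemma floor_pos q : 0 < floor q.
Proof. unfold floor. pose proof (exp_pos (- alpha * Rabs (CSq q) * T)). lra. Qed.

Definition lift (x : list Z -> R) (q : list Z) : R := Rmax (floor q) (x q).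

Definition lifted_drift (x : list Z -> R) (q : list Z) : R :=
  - alpha * CSq q * x q + mean_term (lift x) q.

Lemma lifted_drift_eq x q : QN q -> (forall q', QN q' -> floor q' <= x q') -> lifted_drift x q = drift x q.
Proof.
  intros Hq Hx. unfold lifted_drift, drift, mean_term.
  assert (HE : forall q', QN q' -> lift x q' = x q')
    by (intros q' Hq'; unfold lift; apply Rmax_right; auto).
  rewrite (nb_mean_ext 1 q (lift x) x), (nb_mean_ext (-1) q (lift x) x); auto.
Qed.

Lemma floor_lower_bound q (y dy : R -> R) : y 0 = 1 ->
  (forall x, 0 < x < T -> is_derive y x (dy x) /\ - alpha * CSq q * y x <= dy x) ->
  (forall x, 0 <= x <= T -> cont_within y 0 T x) ->
  forall t, 0 <= t <= T -> 2 * floor q <= y t.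
Proof.
  intros H0 Hd Hcw t Ht. set (a := alpha * CSq q).
  assert (Hg : exp (a * 0) * y 0 <= exp (a * t) * y t).
  { apply (nondecreasing_interval (fun x => exp (a * x) * y x)
             (fun x => exp (a * x) * (a * y x + dy x)) 0 t); [lra | |].
    - intros x Hx. destruct (Hd x ltac:(lra)) as [Hd1 Hd2]. split.
      + eapply is_derive_eq_value.
        * apply (is_derive_mult (fun x => exp (a * x)) y x _ _ (is_derive_exp_lin a x) Hd1).
          intros; apply Rmult_comm.
        * simpl. unfold mult, plus; simpl. ring.
      + apply Rmult_le_pos; [left; apply exp_pos | unfold a in *; lra].
    - intros x Hx. apply cont_within_mult; try lra;
        [apply continuity_pt_cont_within, continuity_pt_exp_lin |].
      apply cont_within_sub with 0 T; try lra. apply Hcw; lra. }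
  rewrite Rmult_0_r, exp_0, H0 in Hg.
  assert (Hy : exp (- a * t) <= y t).
  { replace (- a * t) with (- (a * t)) by ring. rewrite exp_Ropp.
    pose proof (exp_pos (a * t)).
    apply Rmult_le_reg_l with (exp (a * t)); auto. rewrite Rinv_r; lra. }
  unfold floor. replace (2 * (exp (- alpha * Rabs (CSq q) * T) / 2))
    with (exp (- alpha * Rabs (CSq q) * T)) by field.
  eapply Rle_trans; [| exact Hy].
  replace (- alpha * Rabs (CSq q) * T) with ((- alpha * Rabs (CSq q)) * T) by ring.
  pose proof alpha_pos. pose proof (Rabs_pos (CSq q)). pose proof (Rle_abs (CSq q)).
  apply exp_le_mono.
  assert (alpha * CSq q * t <= alpha * Rabs (CSq q) * t)
    by (apply Rmult_le_compat_r; [lra | apply Rmult_le_compat_l; lra]).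
  assert (alpha * Rabs (CSq q) * t <= alpha * Rabs (CSq q) * T)
    by (apply Rmult_le_compat_l; [nra | lra]).
  unfold a. lra.
Qed.

(** Bounds on [C^S] and on the field at the constant [1] over the finite set
    [Q^N]; they fix the Lipschitz constant of the transformed system. *)
Section Bounds.
Variables (MCS B1 : R).
Hypotheses (HMCS : 0 <= MCS) (HM : forall q, QN q -> Rabs (CSq q) <= MCS)
  (HB1 : 0 <= B1) (HF1 : forall q, QN q -> Rabs (lifted_drift (fun _ => 1) q) <= B1).

Definition lip_const : R := alpha * MCS + 2 * alpha * Cst.

Lemma lip_const_nonneg : 0 <= lip_const.
Proof. unfold lip_const. pose proof alpha_pos. pose proof Cst_nonneg. nra. Qed.

Lemma lifted_drift_lip x y d : 0 <= d -> (forall q, QN q -> Rabs (x q - y q) <= d) ->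
  forall q, QN q -> Rabs (lifted_drift x q - lifted_drift y q) <= lip_const * d.
Proof.
  intros Hd H q Hq.
  assert (Hlift : forall q', QN q' ->
            0 < lift x q' /\ 0 < lift y q' /\ Rabs (lift x q' - lift y q') <= d).
  { intros q' Hq'. pose proof (floor_pos q'). unfold lift.
    split; [eapply Rlt_le_trans; [| apply Rmax_l]; auto |].
    split; [eapply Rlt_le_trans; [| apply Rmax_l]; auto |].
    eapply Rle_trans; [| apply (H q' Hq')].
    unfold Rmax, Rabs; repeat destruct Rle_dec; repeat destruct Rcase_abs; lra. }
  pose proof (nb_mean_lip 1 q _ _ d Hq (or_introl eq_refl) Hd Hlift) as H1.
  pose proof (nb_mean_lip (-1) q _ _ d Hq (or_intror eq_refl) Hd Hlift) as H2.
  pose proof (HM q Hq). pose proof (H q Hq). pose proof alpha_pos. pose proof Cst_nonneg.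
  unfold lifted_drift, mean_term, lip_const.
  set (a1 := nb_mean 1 q (lift x) - nb_mean 1 q (lift y)) in *.
  set (a2 := nb_mean (-1) q (lift x) - nb_mean (-1) q (lift y)) in *.
  replace (- alpha * CSq q * x q + alpha * Cst * (nb_mean 1 q (lift x) + nb_mean (-1) q (lift x))
           - (- alpha * CSq q * y q + alpha * Cst * (nb_mean 1 q (lift y) + nb_mean (-1) q (lift y))))
    with (- alpha * (CSq q * (x q - y q)) + alpha * Cst * (a1 + a2)) by (unfold a1, a2; ring).
  eapply Rle_trans; [apply Rabs_triang |]. rewrite !Rabs_mult, Rabs_Ropp.
  rewrite (Rabs_pos_eq alpha), (Rabs_pos_eq Cst) by lra.
  assert (Rabs (CSq q) * Rabs (x q - y q) <= MCS * d)
    by (apply Rmult_le_compat; auto; apply Rabs_pos).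
  assert (Rabs (a1 + a2) <= 2 * d) by (eapply Rle_trans; [apply Rabs_triang | lra]).
  assert (alpha * (Rabs (CSq q) * Rabs (x q - y q)) <= alpha * (MCS * d))
    by (apply Rmult_le_compat_l; lra).
  assert (alpha * Cst * Rabs (a1 + a2) <= alpha * Cst * (2 * d))
    by (apply Rmult_le_compat_l; auto; apply Rmult_le_pos; lra).
  lra.
Qed.

(** The solution of the transformed system, in reversed time. *)
Definition zsol : R -> list Z -> R := picard_lim (list Z) lifted_drift (fun _ => 1) T.

Lemma zsol_solution : ode_solution (list Z) QN lifted_drift (fun _ => 1) T zsol.
Proof. exact (picard_lim_solution _ QN lifted_drift _ T lip_const B1 HT lip_const_nonneg HB1 lifted_drift_lip HF1). Qed.

Lemma zsol_deriv q t : QN q -> 0 <= t <= T ->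
  deriv_within (fun s => zsol s q) 0 T t (lifted_drift (zsol t) q).
Proof. exact (picard_lim_deriv _ QN lifted_drift _ T lip_const B1 HT lip_const_nonneg HB1 lifted_drift_lip HF1 q t). Qed.

Lemma zsol_floor q t : QN q -> 0 <= t <= T -> 2 * floor q <= zsol t q.
Proof.
  intros Hq Ht. destruct zsol_solution as [H0 [Hd Hc]].
  apply (floor_lower_bound q (fun s => zsol s q) (fun s => lifted_drift (zsol s) q)); auto.
  intros x Hx. split; [apply Hd; auto |].
  unfold lifted_drift. pose proof (mean_term_nonneg (lift (zsol x)) q). lra.
Qed.

Lemma zsol_pos q t : QN q -> 0 <= t <= T -> 0 < zsol t q.
Proof. intros. pose proof (zsol_floor q t H H0). pose proof (floor_pos q). lra. Qed.

Lemma zsol_drift q t : QN q -> 0 <= t <= T -> lifted_drift (zsol t) q = drift (zsol t) q.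
Proof.
  intros Hq Ht. apply lifted_drift_eq; auto. intros q' Hq'.
  pose proof (zsol_floor q' t Hq' Ht). pose proof (floor_pos q'). lra.
Qed.

Definition vsol (t : R) (q : list Z) : R := - Rpower (zsol (T - t) q) (- / alpha).

Lemma power_deriv y : 0 < y ->
  derivable_pt_lim (fun x => - Rpower x (- / alpha)) y (/ alpha * (Rpower y (- / alpha) * / y)).
Proof.
  intros Hy. pose proof (derivable_pt_lim_opp _ _ _ (derivable_pt_lim_power y (- / alpha) Hy)) as H.
  replace (/ alpha * (Rpower y (- / alpha) * / y)) with (- (- / alpha * Rpower y (- / alpha - 1))).
  - exact H.
  - unfold Rminus. rewrite Rpower_plus, Rpower_minus_one; auto. ring.
Qed.

Lemma vsol_deriv q t : QN q -> 0 <= t <= T ->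
  deriv_within (fun s => vsol s q) 0 T t
    (/ alpha * (Rpower (zsol (T - t) q) (- / alpha) * / zsol (T - t) q) * (- lifted_drift (zsol (T - t)) q)).
Proof.
  intros Hq Ht. unfold vsol.
  apply (deriv_within_comp (fun s => zsol (T - s) q) (fun x => - Rpower x (- / alpha))).
  - apply (deriv_within_reverse (fun s => zsol s q)). apply zsol_deriv; auto; lra.
  - apply power_deriv, zsol_pos; auto; lra.
Qed.

Lemma vsol_solution : is_solution N qbar T A k sigma c varpi eta gamma vsol.
Proof.
  intros q Hq. split; [| split].
  - eexists. intros t Ht.
    assert (Hpos : forall q', QN q' -> 0 < zsol (T - t) q') by (intros; apply zsol_pos; auto; lra).
    assert (Hx : forall q', QN q' -> vsol t q' = - Rpower (zsol (T - t) q') (- / alpha))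
      by reflexivity.
    destruct (jterm_transform vsol (zsol (T - t)) t 1 q Hq (or_introl eq_refl) Hpos Hx) as [W1 J1].
    destruct (jterm_transform vsol (zsol (T - t)) t (-1) q Hq (or_intror eq_refl) Hpos Hx) as [W2 J2].
    split; [apply vsol_deriv; auto; lra |]. split; auto. split; auto.
    rewrite J1, J2, zsol_drift by (auto; lra).
    pose proof (Hpos q Hq). pose proof alpha_pos.
    unfold vsol, drift, mean_term. fold (CSq q). fold Cst. field. split; lra.
  - eapply deriv_within_cont. apply vsol_deriv; auto; lra.
  - unfold vsol. rewrite Rminus_diag.
    rewrite (proj1 zsol_solution q Hq). rewrite Rpower_base_one; auto.
Qed.

Lemma vsol_bounded : bounded_on N qbar T vsol.
Proof.
  exists (exp (MCS * T)). intros t q Ht Hq. unfold vsol.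
  rewrite Rabs_Ropp, Rabs_pos_eq by (left; apply Rpower_pos).
  pose proof (zsol_floor q (T - t) Hq ltac:(lra)). pose proof (floor_pos q). pose proof alpha_pos.
  eapply Rle_trans; [apply Rpower_le_neg; [left; apply Rinv_0_lt_compat; lra | split; [| exact H]]; lra |].
  unfold floor. replace (2 * (exp (- alpha * Rabs (CSq q) * T) / 2))
    with (exp (- alpha * Rabs (CSq q) * T)) by field.
  unfold Rpower. rewrite ln_exp. apply exp_le_mono.
  replace (- / alpha * (- alpha * Rabs (CSq q) * T)) with (Rabs (CSq q) * T) by (field; lra).
  apply Rmult_le_compat_r; auto; lra.
Qed.

Lemma vsol_neg t q : vsol t q < 0.
Proof. unfold vsol. pose proof (Rpower_pos (zsol (T - t) q) (- / alpha)). lra. Qed.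

(** Uniqueness: any solution [w] is negative, so [z = (- w)^(-alpha)] makes
    sense, solves the same Lipschitz system, and hence equals [zsol]. *)
Section Uniqueness.
Variable w : R -> list Z -> R.
Hypothesis Hw : is_solution N qbar T A k sigma c varpi eta gamma w.

Lemma w_cont q : QN q -> forall t, 0 <= t <= T -> cont_within (fun s => w s q) 0 T t.
Proof.
  intros Hq t Ht. destruct (Hw q Hq) as [[dv Hdv] [HcT _]].
  destruct (Req_dec t T) as [->|]; auto. eapply deriv_within_cont. apply Hdv; lra.
Qed.

(** If some direction is active at [q], the well-definedness of the power
    forces [w t q <> 0]. *)
Lemma w_nonzero phi q : QN q -> (phi = 1 \/ phi = -1)%Z -> act phi q <> [] ->
  forall t, 0 <= t < T -> w t q <> 0.
Proof.
  intros Hq Hphi Hact t Ht Hz. destruct (Hw q Hq) as [[dv Hdv] _].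
  destruct (Hdv t Ht) as [_ [W1 [W2 _]]].
  assert (W : jterm_welldef N qbar gamma w t phi q) by (destruct Hphi as [-> | ->]; auto).
  destruct (W Hact) as [_ Hp]. rewrite Hz in Hp. unfold Rdiv in Hp. lra.
Qed.

Lemma w_neg q : QN q -> forall t, 0 <= t <= T -> w t q < 0.
Proof.
  intros Hq t Ht. destruct (Hw q Hq) as [[dv Hdv] [_ HT1]].
  assert (Hcont := w_cont q Hq).
  destruct (act 1 q) as [|j1 l1] eqn:E1; [destruct (act (-1) q) as [|j2 l2] eqn:E2 |].
  - (* no active direction: [w' = - CS(q) w], so [e^(CS t) w] is constant *)
    set (a := CSq q).
    assert (G1 : exp (a * t) * w t q <= exp (a * T) * w T q).
    { apply (nondecreasing_interval (fun s => exp (a * s) * w s q) (fun _ => 0) t T); [lra | |].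
      - intros x Hx. split; [| lra]. destruct (Hdv x ltac:(lra)) as [Dx [_ [_ Eq]]].
        unfold jterm in Eq. fold (act 1 q) (act (-1) q) in Eq. rewrite E1, E2 in Eq.
        eapply is_derive_eq_value.
        + apply (is_derive_mult (fun s => exp (a * s)) (fun s => w s q) x _ (dv x) (is_derive_exp_lin a x)).
          * apply deriv_within_interior with 0 T; auto. lra.
          * intros; apply Rmult_comm.
        + simpl. unfold mult, plus; simpl. unfold a, CSq. nra.
      - intros x Hx. apply cont_within_sub with 0 T; try lra.
        apply cont_within_mult; try lra; [apply continuity_pt_cont_within, continuity_pt_exp_lin |].
        apply Hcont; lra. }
    rewrite HT1 in G1. pose proof (exp_pos (a * T)). pose proof (exp_pos (a * t)).
    destruct (Rlt_or_le (w t q) 0); auto. nra.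
  - apply (negative_without_zero (fun s => w s q) t T); [lra | | lra |].
    + intros x Hx. apply cont_within_sub with 0 T; try lra. apply Hcont; lra.
    + intros s Hs. apply (w_nonzero (-1)); auto; [rewrite E2; congruence | lra].
  - apply (negative_without_zero (fun s => w s q) t T); [lra | | lra |].
    + intros x Hx. apply cont_within_sub with 0 T; try lra. apply Hcont; lra.
    + intros s Hs. apply (w_nonzero 1); auto; [rewrite E1; congruence | lra].
Qed.

Definition zw (s : R) (q : list Z) : R := Rpower (- w (T - s) q) (- alpha).

Lemma zw_inv s q : QN q -> 0 <= s <= T -> w (T - s) q = - Rpower (zw s q) (- / alpha).
Proof.
  intros Hq Hs. unfold zw. pose proof alpha_pos. pose proof (w_neg q Hq (T - s) ltac:(lra)).
  rewrite Rpower_mult. replace (- alpha * - / alpha) with 1 by (field; lra).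
  rewrite Rpower_1; [ring | lra].
Qed.

Lemma neg_power_deriv x : x < 0 ->
  is_derive (fun x => Rpower (- x) (- alpha)) x (alpha * (Rpower (- x) (- alpha) * / (- x))).
Proof.
  intros Hx. eapply is_derive_eq_value.
  - apply (is_derive_comp (fun y => Rpower y (- alpha)) (fun x => - x) x
             (- alpha * Rpower (- x) (- alpha - 1)) (-1)).
    + apply is_derive_Reals. apply derivable_pt_lim_power. lra.
    + auto_derive; auto.
  - simpl. unfold scal; simpl. unfold mult; simpl. unfold Rminus.
    rewrite Rpower_plus, Rpower_minus_one by lra. ring.
Qed.

Lemma zw_drift q s : QN q -> 0 < s < T -> is_derive (fun s => zw s q) s (drift (zw s) q).
Proof.
  intros Hq Hs. destruct (Hw q Hq) as [[dv Hdv] _].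
  set (t := T - s). destruct (Hdv t ltac:(unfold t; lra)) as [Dw [_ [_ Eq]]].
  assert (Hpos : forall q', QN q' -> 0 < zw s q') by (intros; apply Rpower_pos).
  assert (Hx : forall q', QN q' -> w t q' = - Rpower (zw s q') (- / alpha))
    by (intros; apply zw_inv; auto; lra).
  destruct (jterm_transform w (zw s) t 1 q Hq (or_introl eq_refl) Hpos Hx) as [_ J1].
  destruct (jterm_transform w (zw s) t (-1) q Hq (or_intror eq_refl) Hpos Hx) as [_ J2].
  rewrite J1, J2 in Eq. fold (CSq q) Cst in Eq.
  pose proof (w_neg q Hq t ltac:(unfold t; lra)) as Hneg.
  assert (Hder : is_derive (fun s => w (T - s) q) s (-1 * dv t)).
  { apply (is_derive_comp (fun s => w s q) (fun s => T - s) s (dv t) (-1)).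
    - apply deriv_within_interior with 0 T; auto. unfold t; lra.
    - auto_derive; auto. }
  eapply is_derive_eq_value.
  - apply (is_derive_comp (fun x => Rpower (- x) (- alpha)) (fun s => w (T - s) q) s _ _
             (neg_power_deriv _ Hneg) Hder).
  - simpl. unfold scal; simpl. unfold mult; simpl. fold t.
    pose proof (Hpos q Hq). pose proof alpha_pos.
    change (Rpower (- w t q) (- alpha)) with (zw s q).
    assert (Hdv' : dv t = - w t q * CSq q
                          + w t q * Cst * (/ zw s q * nb_mean 1 q (zw s) + / zw s q * nb_mean (-1) q (zw s)))
      by lra.
    rewrite Hdv'. unfold drift, mean_term. field. split; lra.
Qed.

Lemma zw_cont q x : QN q -> 0 <= x <= T -> cont_within (fun s => zw s q) 0 T x.
Proof.
  intros Hq Hx. unfold zw.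
  apply (cont_within_comp (fun s => w (T - s) q) (fun x => Rpower (- x) (- alpha))); try lra.
  - apply (cont_within_reverse (fun s => w s q)); auto. apply w_cont; auto; lra.
  - apply (proj2 (continuity_pt_filterlim _ _)).
    apply (ex_derive_continuous (fun x => Rpower (- x) (- alpha))).
    eexists; apply neg_power_deriv, w_neg; auto; lra.
Qed.

Lemma zw_initial q : QN q -> zw 0 q = 1.
Proof.
  intros Hq. destruct (Hw q Hq) as [_ [_ HT1]]. unfold zw. rewrite Rminus_0_r, HT1.
  replace (- -1) with 1 by ring. apply Rpower_base_one.
Qed.

Lemma zw_solution : ode_solution (list Z) QN lifted_drift (fun _ => 1) T zw.
Proof.
  assert (Hfloor : forall q s, QN q -> 0 <= s <= T -> 2 * floor q <= zw s q).
  { intros q s Hq Hs.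
    apply (floor_lower_bound q (fun s => zw s q) (fun s => drift (zw s) q)); auto.
    - apply zw_initial; auto.
    - intros x Hx. split; [apply zw_drift; auto |].
      unfold drift. pose proof (mean_term_nonneg (zw x) q). lra.
    - intros; apply zw_cont; auto. }
  split; [exact zw_initial | split; [| intros q Hq s Hs; apply zw_cont; auto]].
  intros q Hq s Hs. rewrite lifted_drift_eq; auto; [apply zw_drift; auto |].
  intros q' Hq'. pose proof (Hfloor q' s Hq' ltac:(lra)). pose proof (floor_pos q'). lra.
Qed.

(** [zw] and [zsol] are continuous on a compact interval and finitely many,
    hence at bounded distance. *)
Lemma zw_zsol_close : exists K0, forall q, QN q -> forall s, 0 <= s <= T ->
  Rabs (zw s q - zsol s q) <= K0.
Proof.
  apply (uniform_bound_QN N qbar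
           (fun q M => forall s, 0 <= s <= T -> Rabs (zw s q - zsol s q) <= M)).
  { intros q M M' H1 H2 s Hs. eapply Rle_trans; [apply H1; auto | auto]. }
  intros q Hq.
  destruct (continuity_ab_maj (fun x => zw (clamp 0 T x) q) 0 T ltac:(lra)) as [mx [Hmx Hmx']].
  { intros x _. apply (clamp_continuity_pt (fun y => zw y q)); [lra |].
    apply zw_cont, clamp_in; auto; lra. }
  exists (zw mx q + (1 + radius T lip_const B1)).
  intros s Hs.
  pose proof (picard_lim_in_radius _ QN lifted_drift (fun _ => 1) T lip_const B1 HT lip_const_nonneg HB1 lifted_drift_lip HF1 q s Hq Hs) as HR.
  fold zsol in HR. pose proof (zsol_pos q s Hq Hs).
  specialize (Hmx s Hs). rewrite !clamp_id in Hmx by lra.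
  pose proof (Rpower_pos (- w (T - s) q) (- alpha)). fold (zw s q) in H0.
  revert HR Hmx. unfold Rabs; repeat destruct Rcase_abs; lra.
Qed.

Lemma w_eq_vsol t q : 0 <= t <= T -> QN q -> w t q = vsol t q.
Proof.
  intros Ht Hq.
  assert (Heq : zw (T - t) q = zsol (T - t) q).
  { apply (ode_solution_unique _ QN lifted_drift (fun _ => 1) T lip_const HT lip_const_nonneg lifted_drift_lip); auto; try lra.
    - apply zw_solution.
    - apply zsol_solution.
    - apply zw_zsol_close. }
  unfold vsol. rewrite <- Heq. rewrite <- zw_inv; auto; [f_equal; ring | lra].
Qed.

End Uniqueness.
End Bounds.
End Model.

Theorem lemma4p2 (N qbar : nat) (T A k sigma c varpi eta : R) (gamma : nat -> R)
  (HN : (1 <= N)%nat) (HT : 0 < T) (HA : 0 < A) (Hk : 0 < k) (Hsigma : 0 < sigma)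
  (Hc : 0 < c) (Hvarpi : 0 < varpi) (Heta : 0 < eta)
  (Hgamma : forall i, (i < N)%nat -> 0 < gamma i) :
  exists v : R -> list Z -> R,
    is_solution N qbar T A k sigma c varpi eta gamma v /\
    bounded_on N qbar T v /\
    (forall w : R -> list Z -> R,
        is_solution N qbar T A k sigma c varpi eta gamma w ->
        bounded_on N qbar T w ->
        forall t q, 0 <= t <= T -> inQN N qbar q -> w t q = v t q) /\
    (forall t q, 0 <= t <= T -> inQN N qbar q -> v t q < 0).
Proof.
  destruct (abs_bound_QN N qbar (CSq N sigma eta gamma)) as [MCS [HMCS HM]].
  destruct (abs_bound_QN N qbar (lifted_drift N qbar T A k sigma c varpi eta gamma (fun _ => 1)))
    as [B1 [HB1 HF1]].
  exists (vsol N qbar T A k sigma c varpi eta gamma).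
  split; [| split; [| split]].
  - exact (vsol_solution N qbar T A k sigma c varpi eta gamma
             HT HA Hk Hsigma Hvarpi Heta Hgamma MCS B1 HMCS HM HB1 HF1).
  - exact (vsol_bounded N qbar T A k sigma c varpi eta gamma
             HT HA Hk Hsigma Hvarpi Heta Hgamma MCS B1 HMCS HM HB1 HF1).
  - (* uniqueness holds among all solutions, bounded or not *)
    intros w Hw _.
    exact (w_eq_vsol N qbar T A k sigma c varpi eta gamma
             HT HA Hk Hsigma Hvarpi Heta Hgamma MCS B1 HMCS HM HB1 HF1 w Hw).
  - intros t q _ _. apply vsol_neg.
Qed.
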